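(* Let $X\subset\mathbb{R}^2$ be a twice continuously differentiable simple closed planar curve, regarded as the mm-space $\mathcal{X}$, and let $\mathbb{S}^1$ be the unit circle regarded likewise. If $H_{\mathcal{X}}(r)=H_{\mathbb{S}^1}(r)$ for all $r\geq0$, then $X$ is isometric to $\mathbb{S}^1$, i.e. $X$ is a circle of radius $1$.
   Context: A plane curve $X$ is regarded as an mm-space $\mathcal{X}=(X,d_X,\mu_X)$ with $d_X$ the restriction of the Euclidean distance of $\mathbb{R}^2$ and $\mu_X$ arclength measure normalized to total mass one. The global distance distribution is $H_{\mathcal{X}}(r)=\mu_X\otimes\mu_X(\{(x,x')\in X\times X: d_X(x,x')\le r\})$, $r\geq0$. *)

From Stdlib Require Import Reals.
Open Scope R_scope.

Definition dist2 (x1 y1 x2 y2 : R) : R := sqrt ((x1 - x2)^2 + (y1 - y2)^2).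

Definition rect_cover_sum (A : R -> R -> Prop) (S : R) : Prop :=
  exists a b c d : nat -> R,
    (forall n, a n <= b n /\ c n <= d n) /\
    (forall s t, A s t -> exists n, a n <= s <= b n /\ c n <= t <= d n) /\
    infinite_sum (fun n => (b n - a n) * (d n - c n)) S.

(* m is the two-dimensional Lebesgue (outer) measure of A:
   the infimum of the total areas of countable rectangle covers. *)
Definition lebesgue2 (A : R -> R -> Prop) (m : R) : Prop :=
  (forall S, rect_cover_sum A S -> m <= S) /\
  (forall m', (forall S, rect_cover_sum A S -> m' <= S) -> m' <= m).

(* For a closed curve given by an arclength (unit-speed) L-periodic
   parametrization t |-> (gx t, gy t), the pairs of parameters in [0,L)^2
   whose images are at Euclidean distance <= r.  The normalized arclength
   measure mu_X is the push-forward of Lebesgue measure on [0,L) divided by L,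
   so mu_X (x) mu_X of {d_X <= r} is lebesgue2 of this set divided by L^2. *)
Definition close_pairs (gx gy : R -> R) (L r : R) : R -> R -> Prop :=
  fun s t => 0 <= s < L /\ 0 <= t < L /\ dist2 (gx s) (gy s) (gx t) (gy t) <= r.

Definition dist_distr (gx gy : R -> R) (L r h : R) : Prop :=
  exists m, lebesgue2 (close_pairs gx gy L r) m /\ h = m / L ^ 2.

(* (gx,gy) : R -> R^2 is a C^2, unit-speed, L-periodic parametrization,
   injective on [0,L): i.e. an arclength parametrization of a C^2 simple
   closed curve of length L. *)
Definition C2_simple_closed_arclength (gx gy : R -> R) (L : R) : Prop :=
  0 < L /\
  (exists gx1 gx2 gy1 gy2 : R -> R,
     (forall t, derivable_pt_lim gx t (gx1 t)) /\
     (forall t, derivable_pt_lim gx1 t (gx2 t)) /\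
     (forall t, derivable_pt_lim gy t (gy1 t)) /\
     (forall t, derivable_pt_lim gy1 t (gy2 t)) /\
     continuity gx2 /\ continuity gy2 /\
     (forall t, (gx1 t)^2 + (gy1 t)^2 = 1)) /\
  (forall t, gx (t + L) = gx t /\ gy (t + L) = gy t) /\
  (forall s t, 0 <= s < L -> 0 <= t < L ->
     gx s = gx t -> gy s = gy t -> s = t).

(* Sample the curve at [n] equally spaced parameters.  The empirical distribution of the
   pairwise distances of the sample is squeezed between [H (r - 4 L / n)] and [H (r + 4 L / n)]
   (grid cells against rectangle covers), so the sample means of [d ^ 2] and [d ^ 4] converge
   to the corresponding moments of [H = H_S1], namely [2] and [6].  For a finite point set
   with centroid [c], inertia [V = mean |x - c| ^ 2] and [W = variance of |x - c| ^ 2], these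
   means are [2 V] and at least [2 W + 6 V ^ 2]; hence [V -> 1] and [W -> 0].  The centroids
   of the samples converge to some [c], and as [|gamma s - c_n| ^ 2 - V_n] is Lipschitz in [s]
   uniformly in [n], [W -> 0] forces [|gamma s - c| = 1] for every [s]. *)

From Stdlib Require Import Reals Lra Lia Psatz Classical ZArith.
Open Scope R_scope.

(** * Finite sums *)

Fixpoint rsum (n : nat) (f : nat -> R) : R :=
  match n with O => 0 | S k => rsum k f + f k end.

Definition rsum2 (n : nat) (F : nat -> nat -> R) : R :=
  rsum n (fun i => rsum n (fun j => F i j)).

Lemma rsum_ext n f g : (forall i, (i < n)%nat -> f i = g i) -> rsum n f = rsum n g.
Proof.
  induction n as [|n IH]; intros H; simpl; [reflexivity|].
  rewrite IH, H; [reflexivity|lia|intros; apply H; lia].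
Qed.

Lemma rsum_le n f g : (forall i, (i < n)%nat -> f i <= g i) -> rsum n f <= rsum n g.
Proof.
  induction n as [|n IH]; intros H; simpl; [lra|].
  apply Rplus_le_compat; [apply IH; intros; apply H|apply H]; lia.
Qed.

Lemma rsum_plus n f g : rsum n (fun i => f i + g i) = rsum n f + rsum n g.
Proof. induction n; simpl; [|rewrite IHn]; ring. Qed.

Lemma rsum_minus n f g : rsum n (fun i => f i - g i) = rsum n f - rsum n g.
Proof. induction n; simpl; [|rewrite IHn]; ring. Qed.

Lemma rsum_scal n c f : rsum n (fun i => c * f i) = c * rsum n f.
Proof. induction n; simpl; [|rewrite IHn]; ring. Qed.

Lemma rsum_const n c : rsum n (fun _ => c) = INR n * c.
Proof. induction n; simpl rsum; [simpl; ring|rewrite IHn, S_INR; ring]. Qed.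

Lemma rsum_nonneg n f : (forall i, (i < n)%nat -> 0 <= f i) -> 0 <= rsum n f.
Proof.
  intros H. rewrite <- (Rmult_0_r (INR n)), <- rsum_const. now apply rsum_le.
Qed.

Lemma rsum_swap n m (F : nat -> nat -> R) :
  rsum n (fun i => rsum m (fun j => F i j)) = rsum m (fun j => rsum n (fun i => F i j)).
Proof.
  induction n; simpl.
  - rewrite rsum_const; ring.
  - rewrite IHn, <- rsum_plus; reflexivity.
Qed.

Lemma rsum_mult n m f g :
  rsum n (fun i => rsum m (fun j => f i * g j)) = rsum n f * rsum m g.
Proof.
  rewrite Rmult_comm, <- rsum_scal. apply rsum_ext; intros.
  rewrite Rmult_comm, <- rsum_scal. apply rsum_ext; intros. ring.
Qed.

Lemma rsum_add_range n m f : rsum (n + m) f = rsum n f + rsum m (fun j => f (n + j)%nat).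
Proof.
  induction m; simpl; [rewrite Nat.add_0_r; ring|].
  rewrite Nat.add_succ_r; simpl; rewrite IHm; ring.
Qed.

Lemma rsum_blocks n m f :
  rsum (n * m) f = rsum n (fun i => rsum m (fun j => f (i * m + j)%nat)).
Proof. induction n; simpl; auto. rewrite Nat.add_comm, rsum_add_range, IHn. reflexivity. Qed.

Lemma rsum_abs n f : Rabs (rsum n f) <= rsum n (fun i => Rabs (f i)).
Proof.
  induction n; simpl; [rewrite Rabs_R0; lra|].
  eapply Rle_trans; [apply Rabs_triang|lra].
Qed.

Lemma rsum_ge_term n f k :
  (k < n)%nat -> (forall i, (i < n)%nat -> 0 <= f i) -> f k <= rsum n f.
Proof.
  induction n; intros Hk H; [lia|]. simpl.
  destruct (Nat.eq_dec k n) as [->|Hne].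
  - assert (0 <= rsum n f) by (apply rsum_nonneg; intros; apply H; lia). lra.
  - assert (f k <= rsum n f) by (apply IHn; [lia|intros; apply H; lia]).
    assert (0 <= f n) by (apply H; lia). lra.
Qed.

Lemma rsum_telescope (F : nat -> R) n : rsum n (fun k => F (S k) - F k) = F n - F O.
Proof. induction n; simpl rsum; [ring|rewrite IHn; ring]. Qed.

Lemma rsum_sum_f_R0 N f : rsum (S N) f = sum_f_R0 f N.
Proof. induction N; simpl; [ring|]. simpl in IHN. rewrite <- IHN. reflexivity. Qed.

Lemma rsum_le_infinite_sum f l N :
  infinite_sum f l -> (forall n, 0 <= f n) -> rsum N f <= l.
Proof.
  intros Hs Hf. destruct N.
  - pose proof (sum_incr f 0 l Hs Hf). simpl in *. pose proof (Hf O). lra.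
  - rewrite rsum_sum_f_R0. now apply sum_incr.
Qed.

Lemma rsum2_ext n F G :
  (forall i j, (i < n)%nat -> (j < n)%nat -> F i j = G i j) -> rsum2 n F = rsum2 n G.
Proof. intros H. apply rsum_ext; intros i Hi. apply rsum_ext; intros j Hj. auto. Qed.

Lemma rsum2_le n F G :
  (forall i j, (i < n)%nat -> (j < n)%nat -> F i j <= G i j) -> rsum2 n F <= rsum2 n G.
Proof. intros H. apply rsum_le; intros i Hi. apply rsum_le; intros j Hj. auto. Qed.

Lemma rsum2_plus n F G :
  rsum2 n (fun i j => F i j + G i j) = rsum2 n F + rsum2 n G.
Proof. unfold rsum2. rewrite <- rsum_plus. apply rsum_ext. intros. apply rsum_plus. Qed.

Lemma rsum2_minus n F G :
  rsum2 n (fun i j => F i j - G i j) = rsum2 n F - rsum2 n G.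
Proof. unfold rsum2. rewrite <- rsum_minus. apply rsum_ext. intros. apply rsum_minus. Qed.

Lemma rsum2_scal n c F : rsum2 n (fun i j => c * F i j) = c * rsum2 n F.
Proof. unfold rsum2. rewrite <- rsum_scal. apply rsum_ext. intros. apply rsum_scal. Qed.

Lemma rsum2_const n c : rsum2 n (fun _ _ => c) = INR n ^ 2 * c.
Proof.
  unfold rsum2. rewrite (rsum_ext _ _ (fun _ => INR n * c)) by (intros; apply rsum_const).
  rewrite rsum_const. ring.
Qed.

Lemma rsum2_mult n f g : rsum2 n (fun i j => f i * g j) = rsum n f * rsum n g.
Proof. apply rsum_mult. Qed.

Lemma rsum2_nonneg n F :
  (forall i j, (i < n)%nat -> (j < n)%nat -> 0 <= F i j) -> 0 <= rsum2 n F.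
Proof. intros H. rewrite <- (Rmult_0_r (INR n ^ 2)), <- rsum2_const. now apply rsum2_le. Qed.

Lemma rsum2_rsum_swap n K (F : nat -> nat -> nat -> R) :
  rsum2 n (fun i j => rsum K (fun k => F k i j)) = rsum K (fun k => rsum2 n (F k)).
Proof.
  unfold rsum2. erewrite rsum_ext by (intros; apply rsum_swap).
  apply rsum_swap.
Qed.

(** * Real induction and compactness *)

Lemma real_interval_induction (a b : R) (Q : R -> R -> Prop) :
  a <= b ->
  (forall x, a <= x <= b -> exists e, 0 < e /\
      forall u v, x - e < u -> u <= v -> v < x + e -> Q u v) ->
  (forall u v w, u <= v -> v <= w -> Q u v -> Q v w -> Q u w) ->
  Q a b.
Proof.
  intros Hab Hloc Hcat.
  set (E := fun x => a <= x <= b /\ Q a x).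
  assert (Haa : Q a a).
  { destruct (Hloc a) as [e [He H]]; [lra|]. apply H; lra. }
  destruct (completeness E) as [c [Hub Hlub]].
  { exists b; intros x [Hx _]; lra. }
  { exists a; split; [lra|auto]. }
  assert (Hac : a <= c) by (apply Hub; split; [lra|auto]).
  assert (Hcb : c <= b) by (apply Hlub; intros x [Hx _]; lra).
  destruct (Hloc c) as [e [He Hc]]; [lra|].
  assert (Hx : exists x, E x /\ c - e < x).
  { apply NNPP; intro Hn. assert (c <= c - e); [|lra].
    apply Hlub. intros x Ex. apply Rnot_lt_le. intros Hlt. apply Hn. eauto. }
  destruct Hx as [x [[Hx Qax] Hxe]].
  assert (Hxc : x <= c) by (apply Hub; split; auto).
  set (v := Rmin b (c + e/2)).
  assert (Hvb : v <= b) by apply Rmin_l.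
  assert (Hve : v <= c + e/2) by apply Rmin_r.
  assert (Hxv : x <= v) by (apply Rmin_glb; lra).
  assert (Qav : Q a v) by (apply Hcat with x; auto; try lra; apply Hc; lra).
  assert (v <= c) by (apply Hub; split; auto; lra).
  unfold v in *. destruct (Rle_dec b (c + e/2)).
  - rewrite Rmin_left in Qav; auto.
  - rewrite Rmin_right in *; lra.
Qed.

Lemma rectangle_finite_subcover a b c d (U : nat -> R -> R -> Prop) :
  a <= b -> c <= d ->
  (forall k x y, U k x y -> exists e, 0 < e /\
      forall x' y', Rabs (x' - x) < e -> Rabs (y' - y) < e -> U k x' y') ->
  (forall x y, a <= x <= b -> c <= y <= d -> exists k, U k x y) ->
  exists N, forall x y, a <= x <= b -> c <= y <= d -> exists k, (k < N)%nat /\ U k x y.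
Proof.
  intros Hab Hcd Hopen Hcov.
  set (Q1 := fun u v => exists N, forall x y, u <= x <= v -> c <= y <= d ->
                          exists k, (k < N)%nat /\ U k x y).
  change (Q1 a b). apply real_interval_induction; auto.
  - intros x Hx.
    set (Q2 := fun u v => exists e, 0 < e /\ exists N, forall x' y,
               Rabs (x' - x) < e -> u <= y <= v -> exists k, (k < N)%nat /\ U k x' y).
    assert (HQ2 : Q2 c d).
    { apply real_interval_induction; auto.
      - intros y Hy. destruct (Hcov x y Hx Hy) as [k Hk].
        destruct (Hopen k x y Hk) as [e [He Hball]].
        exists e; split; auto. intros u v Hu Huv Hv.
        exists e; split; auto. exists (S k). intros x' y' Hx' Hy'.
        exists k; split; [lia|]. apply Hball; auto. apply Rabs_def1; lra.
      - intros u v w _ _ [e1 [He1 [N1 H1]]] [e2 [He2 [N2 H2]]].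
        exists (Rmin e1 e2); split; [now apply Rmin_pos|].
        exists (Nat.max N1 N2). intros x' y Hx' Hy.
        pose proof (Rmin_l e1 e2). pose proof (Rmin_r e1 e2).
        destruct (Rle_dec y v);
          [destruct (H1 x' y) as [k [Hk Uk]]|destruct (H2 x' y) as [k [Hk Uk]]];
          try lra; exists k; split; auto; lia. }
    destruct HQ2 as [e [He [N HN]]].
    exists e; split; auto. intros u v Hu Huv Hv. exists N.
    intros x' y Hx' Hy. apply HN; auto. apply Rabs_def1; lra.
  - intros u v w _ _ [N1 H1] [N2 H2]. exists (Nat.max N1 N2).
    intros x y Hx Hy. destruct (Rle_dec x v);
      [destruct (H1 x y) as [k [Hk Uk]]|destruct (H2 x y) as [k [Hk Uk]]];
      try lra; exists k; split; auto; lia.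
Qed.

Lemma finite_common_bound (n : nat) (P : nat -> nat -> Prop) :
  (forall i N N', (N <= N')%nat -> P i N -> P i N') ->
  (forall i, (i < n)%nat -> exists N, P i N) ->
  exists N, forall i, (i < n)%nat -> P i N.
Proof.
  intros Hmono. induction n as [|n IH]; intros H.
  - exists O; intros; lia.
  - destruct IH as [N1 H1]; [intros; apply H; lia|].
    destruct (H n) as [N2 H2]; [lia|].
    exists (Nat.max N1 N2). intros i Hi. destruct (Nat.eq_dec i n) as [->|].
    + apply Hmono with N2; auto; lia.
    + apply Hmono with N1; [lia|]. apply H1; lia.
Qed.

Lemma nat_multiple_between x tau :
  0 <= x -> 0 < tau -> exists K : nat, x <= INR K * tau <= x + tau.
Proof.
  intros Hx Ht. destruct (archimed (x / tau)) as [H1 H2].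
  assert (Hpos : (0 < up (x / tau))%Z).
  { apply lt_IZR. apply Rle_lt_trans with (x / tau); auto.
    apply Rmult_le_pos; [lra|left; now apply Rinv_0_lt_compat]. }
  exists (Z.to_nat (up (x / tau))). rewrite INR_IZR_INZ, Z2Nat.id by lia.
  assert (E : x / tau * tau = x) by (field; lra).
  split; nra.
Qed.

Lemma Rabs_sub_le_of_deriv_bound f f' :
  (forall t, derivable_pt_lim f t (f' t)) -> (forall t, Rabs (f' t) <= 1) ->
  forall s t, Rabs (f s - f t) <= Rabs (s - t).
Proof.
  intros Hd Hb s t. destruct (MVT_abs f f' t s) as [c [E _]]; [intros; apply Hd|].
  rewrite E. pose proof (Hb c). pose proof (Rabs_pos (s - t)). nra.
Qed.

Lemma Rabs_le_inv x a : Rabs x <= a -> - a <= x <= a.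
Proof. unfold Rabs; destruct (Rcase_abs x); lra. Qed.

(** * Grid cells against rectangle covers *)

Definition ind (a b x : R) : R :=
  if Rle_dec a x then if Rle_dec x b then 1 else 0 else 0.

Lemma ind_cases a b x : ind a b x = 0 \/ ind a b x = 1.
Proof. unfold ind; destruct (Rle_dec a x), (Rle_dec x b); auto. Qed.

Lemma ind_nonneg a b x : 0 <= ind a b x.
Proof. destruct (ind_cases a b x) as [-> | ->]; lra. Qed.

Lemma ind_in a b x : a <= x <= b -> ind a b x = 1.
Proof. intros [H1 H2]; unfold ind; destruct (Rle_dec a x), (Rle_dec x b); lra. Qed.

Lemma ind_out a b x : ~ (a <= x <= b) -> ind a b x = 0.
Proof. intros H; unfold ind; destruct (Rle_dec a x), (Rle_dec x b); auto; tauto. Qed.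

Lemma ind_pos_in a b x : 0 < ind a b x -> a <= x <= b.
Proof. unfold ind; destruct (Rle_dec a x), (Rle_dec x b); lra. Qed.

Lemma ind_scale a b x M : 0 < M -> ind a b (x / M) = ind (M * a) (M * b) x.
Proof.
  intros HM.
  assert (E : forall u v, u * M <= v * M <-> u <= v).
  { split; intros; [apply Rmult_le_reg_r with M|apply Rmult_le_compat_r]; lra. }
  assert (Ex : x / M * M = x) by (field; lra).
  destruct (classic (a <= x / M <= b)) as [Hin|Hout].
  - rewrite !ind_in; auto. rewrite <- (E a), <- (E _ b), Ex in Hin. lra.
  - rewrite !ind_out; auto. intros Hin. apply Hout.
    rewrite <- (E a), <- (E _ b), Ex. lra.
Qed.

(* Cells are shrunk by [del] to make them pairwise disjoint compact squares. *)
Definition cell_ind (h del : R) (i : nat) (x : R) : R :=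
  ind (INR i * h + del) ((INR i + 1) * h - del) x.

Lemma cell_ind_nonneg h del i x : 0 <= cell_ind h del i x.
Proof. apply ind_nonneg. Qed.

Lemma cell_ind_sum_le_1 n h del x : 0 < del -> rsum n (fun i => cell_ind h del i x) <= 1.
Proof.
  intros Hdel. induction n; simpl; [lra|]. unfold cell_ind at 2.
  destruct (ind_cases (INR n * h + del) ((INR n + 1) * h - del) x) as [-> | E]; [lra|].
  assert (Hx : INR n * h + del <= x <= (INR n + 1) * h - del) by (apply ind_pos_in; lra).
  rewrite E, (rsum_ext _ _ (fun _ => 0)), rsum_const; [lra|].
  intros i Hi. apply ind_out. intros [H1 H2].
  assert (INR i + 1 <= INR n) by (rewrite <- S_INR; apply le_INR; lia).
  assert (0 < h) by nra. nra.
Qed.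

Definition lattice_count (a b : R) (P : nat) : R := rsum P (fun p => ind a b (INR p)).

Lemma lattice_count_nonneg a b P : 0 <= lattice_count a b P.
Proof. apply rsum_nonneg; intros; apply ind_nonneg. Qed.

Lemma lattice_count_ext a b b' P :
  INR P - 1 <= b -> INR P - 1 <= b' -> lattice_count a b P = lattice_count a b' P.
Proof.
  intros H1 H2. apply rsum_ext. intros i Hi.
  assert (INR i + 1 <= INR P) by (rewrite <- S_INR; apply le_INR; lia).
  destruct (Rle_dec a (INR i)); [rewrite !ind_in|rewrite !ind_out]; lra.
Qed.

Lemma lattice_count_le P a b : a <= b -> lattice_count a b P <= b - a + 1.
Proof.
  revert a b. induction P as [|P IH]; intros a b Hab; unfold lattice_count; simpl; [lra|].
  fold (lattice_count a b P).
  destruct (classic (a <= INR P <= b)) as [Hin|Hout].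
  - rewrite ind_in by auto. rewrite (lattice_count_ext a b (INR P - 1)) by lra.
    destruct (Rle_dec a (INR P - 1)).
    + specialize (IH a (INR P - 1) r). lra.
    + unfold lattice_count. rewrite (rsum_ext _ _ (fun _ => 0)), rsum_const; [lra|].
      intros i Hi. apply ind_out.
      assert (INR i + 1 <= INR P) by (rewrite <- S_INR; apply le_INR; lia). lra.
  - rewrite ind_out by auto. specialize (IH a b Hab). lra.
Qed.

Lemma lattice_count_gt P a b : 0 <= a -> b < INR P -> b - a - 1 < lattice_count a b P.
Proof.
  revert b. induction P as [|P IH]; intros b Ha Hb; unfold lattice_count; cbn [rsum].
  { simpl in Hb. lra. }
  fold (lattice_count a b P). rewrite S_INR in Hb.
  pose proof (ind_nonneg a b (INR P)). pose proof (lattice_count_nonneg a b P).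
  destruct (Rlt_dec b (INR P)); [specialize (IH b Ha r); lra|].
  destruct (Rle_dec a (INR P)); [|lra].
  rewrite ind_in by lra. rewrite (lattice_count_ext a b (b - 1)) by lra.
  specialize (IH (b - 1) Ha ltac:(lra)). lra.
Qed.

Lemma rsum_ind_scaled a b M P :
  0 < M -> rsum P (fun p => ind a b (INR p / M)) = lattice_count (M * a) (M * b) P.
Proof. intros HM. apply rsum_ext. intros. now apply ind_scale. Qed.

Definition b2r (b : bool) : R := if b then 1 else 0.

Lemma b2r_cases b : b2r b = 0 \/ b2r b = 1.
Proof. destruct b; simpl; auto. Qed.

Lemma rsum2_b2r_nonneg n (sel : nat -> nat -> bool) :
  0 <= rsum2 n (fun i j => b2r (sel i j)).
Proof. apply rsum2_nonneg. intros i j _ _. destruct (b2r_cases (sel i j)) as [-> | ->]; lra. Qed.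

Lemma rsum2_swap n m (F : nat -> nat -> nat -> nat -> R) :
  rsum2 n (fun i j => rsum2 m (F i j)) = rsum2 m (fun p q => rsum2 n (fun i j => F i j p q)).
Proof.
  unfold rsum2. erewrite rsum_ext by (intros; apply rsum_swap). rewrite rsum_swap.
  apply rsum_ext. intros p _.
  erewrite rsum_ext by (intros; apply rsum_swap). apply rsum_swap.
Qed.

Lemma selected_cells_sum_le_1 n h del (sel : nat -> nat -> bool) x y : 0 < del ->
  rsum2 n (fun i j => b2r (sel i j) * (cell_ind h del i x * cell_ind h del j y)) <= 1.
Proof.
  intros Hdel.
  pose proof (cell_ind_sum_le_1 n h del x Hdel). pose proof (cell_ind_sum_le_1 n h del y Hdel).
  assert (0 <= rsum n (fun i => cell_ind h del i x))
    by (apply rsum_nonneg; intros; apply cell_ind_nonneg).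
  assert (0 <= rsum n (fun i => cell_ind h del i y))
    by (apply rsum_nonneg; intros; apply cell_ind_nonneg).
  apply Rle_trans with (rsum2 n (fun i j => cell_ind h del i x * cell_ind h del j y)).
  - apply rsum2_le. intros i j _ _.
    pose proof (cell_ind_nonneg h del i x). pose proof (cell_ind_nonneg h del j y).
    destruct (b2r_cases (sel i j)) as [-> | ->]; nra.
  - rewrite rsum2_mult. nra.
Qed.

Definition cells_covered (n N : nat) (h del : R) (sel : nat -> nat -> bool)
    (a b c d : nat -> R) : Prop :=
  forall i j x y, (i < n)%nat -> (j < n)%nat -> sel i j = true ->
    INR i * h + del <= x <= (INR i + 1) * h - del ->
    INR j * h + del <= y <= (INR j + 1) * h - del ->
    exists k, (k < N)%nat /\ a k <= x <= b k /\ c k <= y <= d k.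

Lemma selected_cells_le_cover_count n N h del sel a b c d x y :
  0 < del -> cells_covered n N h del sel a b c d ->
  rsum2 n (fun i j => b2r (sel i j) * (cell_ind h del i x * cell_ind h del j y))
  <= rsum N (fun k => ind (a k) (b k) x * ind (c k) (d k) y).
Proof.
  intros Hdel Hcov.
  assert (Hrhs : 0 <= rsum N (fun k => ind (a k) (b k) x * ind (c k) (d k) y)).
  { apply rsum_nonneg; intros. apply Rmult_le_pos; apply ind_nonneg. }
  destruct (classic (exists i j, (i < n)%nat /\ (j < n)%nat /\ sel i j = true /\
     0 < cell_ind h del i x /\ 0 < cell_ind h del j y)) as [Hin|Hout].
  - destruct Hin as [i [j [Hi [Hj [Hs [Hx Hy]]]]]].
    destruct (Hcov i j x y Hi Hj Hs (ind_pos_in _ _ _ Hx) (ind_pos_in _ _ _ Hy))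
      as [k [Hk [Hxk Hyk]]].
    assert (Hge1 : 1 <= rsum N (fun k => ind (a k) (b k) x * ind (c k) (d k) y)).
    { eapply Rle_trans; [|apply rsum_ge_term with (k := k); auto].
      - rewrite !ind_in by auto. lra.
      - intros; apply Rmult_le_pos; apply ind_nonneg. }
    pose proof (selected_cells_sum_le_1 n h del sel x y Hdel).
    lra.
  - rewrite (rsum2_ext _ _ (fun _ _ => 0)), rsum2_const; [lra|].
    intros i j Hi Hj. destruct (sel i j) eqn:Hs; simpl; [|ring].
    destruct (ind_cases (INR i * h + del) ((INR i + 1) * h - del) x) as [Ex|Ex];
      unfold cell_ind; rewrite Ex; [ring|].
    destruct (ind_cases (INR j * h + del) ((INR j + 1) * h - del) y) as [Ey|Ey];
      rewrite Ey; [ring|].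
    exfalso. apply Hout. exists i, j. unfold cell_ind. rewrite Ex, Ey. repeat split; auto; lra.
Qed.

Lemma rsum2_ind_rect_scaled a b c d m P : 0 < m ->
  rsum2 P (fun p q => ind a b (INR p / m) * ind c d (INR q / m))
  = lattice_count (m * a) (m * b) P * lattice_count (m * c) (m * d) P.
Proof. intros Hm. rewrite rsum2_mult, !rsum_ind_scaled by auto. reflexivity. Qed.

Lemma lattice_count_cell_gt n m h del i P :
  0 < m -> 0 < del -> 2 * del < h -> (i < n)%nat -> m * INR n * h < INR P ->
  m * (h - 2 * del) - 1
  < lattice_count (m * (INR i * h + del)) (m * ((INR i + 1) * h - del)) P.
Proof.
  intros Hm Hdel Hh Hi HP.
  assert (INR i + 1 <= INR n) by (rewrite <- S_INR; apply le_INR; lia).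
  pose proof (pos_INR i).
  assert (0 <= INR i * h) by (apply Rmult_le_pos; lra).
  assert ((INR i + 1) * h <= INR n * h) by (apply Rmult_le_compat_r; lra).
  eapply Rle_lt_trans; [|apply lattice_count_gt].
  - right. ring.
  - apply Rmult_le_pos; lra.
  - apply Rle_lt_trans with (m * INR n * h); [|lra].
    rewrite Rmult_assoc. apply Rmult_le_compat_l; lra.
Qed.

(* Count the points of the lattice [(Z / M) ^ 2] in the selected cells and in the rectangles. *)
Lemma lattice_count_cells_le_cover n N M h del sel a b c d :
  0 < del -> 2 * del < h -> (forall k, a k <= b k /\ c k <= d k) ->
  cells_covered n N h del sel a b c d -> 1 <= INR M * (h - 2 * del) ->
  (INR M * (h - 2 * del) - 1) ^ 2 * rsum2 n (fun i j => b2r (sel i j))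
  <= rsum N (fun k => (INR M * (b k - a k) + 1) * (INR M * (d k - c k) + 1)).
Proof.
  intros Hdel Hh Hab Hcov HM.
  set (m := INR M) in *.
  assert (Hm : 0 < m) by nra.
  destruct (INR_unbounded (m * INR n * h)) as [P HP].
  set (cnt := fun i => lattice_count (m * (INR i * h + del)) (m * ((INR i + 1) * h - del)) P).
  assert (Hcount : rsum2 n (fun i j => b2r (sel i j) * (cnt i * cnt j))
                   <= rsum N (fun k => lattice_count (m * a k) (m * b k) P
                                       * lattice_count (m * c k) (m * d k) P)).
  { replace (rsum2 n (fun i j => b2r (sel i j) * (cnt i * cnt j))) with
      (rsum2 P (fun p q => rsum2 n (fun i j =>
         b2r (sel i j) * (cell_ind h del i (INR p / m) * cell_ind h del j (INR q / m))))).
    2:{ rewrite rsum2_swap. apply rsum2_ext. intros i j _ _.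
        rewrite rsum2_scal. unfold cell_ind, cnt. now rewrite rsum2_ind_rect_scaled. }
    replace (rsum N (fun k => lattice_count (m * a k) (m * b k) P
                              * lattice_count (m * c k) (m * d k) P)) with
      (rsum2 P (fun p q => rsum N (fun k =>
         ind (a k) (b k) (INR p / m) * ind (c k) (d k) (INR q / m)))).
    2:{ rewrite rsum2_rsum_swap. apply rsum_ext. intros. now apply rsum2_ind_rect_scaled. }
    apply rsum2_le. intros. now apply selected_cells_le_cover_count. }
  assert (Hcnt : forall i, (i < n)%nat -> m * (h - 2 * del) - 1 <= cnt i)
    by (intros; apply Rlt_le, (lattice_count_cell_gt n); auto; lra).
  eapply Rle_trans; [|eapply Rle_trans; [apply Hcount|]].
  - rewrite <- rsum2_scal. apply rsum2_le. intros i j Hi Hj.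
    pose proof (Hcnt i Hi). pose proof (Hcnt j Hj).
    destruct (b2r_cases (sel i j)) as [-> | ->]; [lra|].
    simpl pow. rewrite Rmult_1_r, Rmult_1_r, Rmult_1_l. apply Rmult_le_compat; lra.
  - apply rsum_le. intros k _. destruct (Hab k).
    pose proof (lattice_count_nonneg (m * a k) (m * b k) P).
    pose proof (lattice_count_nonneg (m * c k) (m * d k) P).
    pose proof (lattice_count_le P (m * a k) (m * b k) ltac:(nra)).
    pose proof (lattice_count_le P (m * c k) (m * d k) ltac:(nra)).
    apply Rmult_le_compat; lra.
Qed.

Lemma nonpos_of_quadratic_le_linear (x y z : R) (M0 : nat) :
  (forall M : nat, (M0 <= M)%nat -> INR M ^ 2 * x <= INR M * y + z) -> x <= 0.
Proof.
  intros H. apply Rnot_lt_le. intros Hx.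
  destruct (INR_unbounded (INR M0 + 1 + (Rabs y + Rabs z) / x)) as [M HM].
  assert (E : (Rabs y + Rabs z) / x * x = Rabs y + Rabs z) by (field; lra).
  pose proof (Rabs_pos y). pose proof (Rabs_pos z).
  pose proof (Rle_abs y). pose proof (Rle_abs z).
  assert (Hq : 0 <= (Rabs y + Rabs z) / x)
    by (apply Rmult_le_pos; [lra|left; now apply Rinv_0_lt_compat]).
  assert (HM0 : (M0 <= M)%nat).
  { apply INR_le. pose proof (pos_INR M0). lra. }
  specialize (H M HM0). pose proof (pos_INR M0).
  assert (Hyz : Rabs y + Rabs z < INR M * x) by nra.
  simpl in H. nra.
Qed.

Lemma grid_area_le_finite_cover n N h del sel a b c d :
  0 < del -> 2 * del < h -> (forall k, a k <= b k /\ c k <= d k) ->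
  cells_covered n N h del sel a b c d ->
  (h - 2 * del) ^ 2 * rsum2 n (fun i j => b2r (sel i j))
  <= rsum N (fun k => (b k - a k) * (d k - c k)).
Proof.
  intros Hdel Hh Hab Hcov.
  set (w := h - 2 * del). set (C := rsum2 n (fun i j => b2r (sel i j))).
  set (A := rsum N (fun k => (b k - a k) * (d k - c k))).
  set (B := rsum N (fun k => (b k - a k) + (d k - c k))).
  assert (HC : 0 <= C) by apply rsum2_b2r_nonneg.
  destruct (INR_unbounded (/ w)) as [M0 HM0].
  enough (w ^ 2 * C - A <= 0) by lra.
  apply (nonpos_of_quadratic_le_linear _ (B + 2 * w * C) (INR N) M0).
  intros M HM.
  assert (HMw : 1 <= INR M * w).
  { assert (INR M0 <= INR M) by now apply le_INR.
    assert (E : / w * w = 1) by (field; unfold w; lra). unfold w in *. nra. }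
  pose proof (lattice_count_cells_le_cover n N M h del sel a b c d Hdel Hh Hab Hcov HMw) as Hl.
  fold w C in Hl.
  assert (E : rsum N (fun k => (INR M * (b k - a k) + 1) * (INR M * (d k - c k) + 1))
              = INR M ^ 2 * A + INR M * B + INR N).
  { unfold A, B.
    rewrite <- (Rmult_1_r (INR N)), <- (rsum_const N 1), <- !rsum_scal, <- !rsum_plus.
    apply rsum_ext. intros. ring. }
  rewrite E in Hl. nra.
Qed.

Lemma rsum_geometric_half N : rsum N (fun k => / 2 ^ S k) = 1 - / 2 ^ N.
Proof.
  induction N; cbn [rsum]; [simpl; field|]. rewrite IHN.
  assert (0 < 2 ^ N) by (apply pow_lt; lra). simpl pow. field. lra.
Qed.

(* Enlarging the [k]-th rectangle by [eps / (2 ^ (k + 1) * (2 * perimeter + 4))] costs at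
   most [eps / 2 ^ (k + 1)] in area. *)
Lemma rect_cover_sum_open_enlargement A T eps :
  rect_cover_sum A T -> 0 < eps ->
  exists a b c d : nat -> R,
    (forall k, a k <= b k /\ c k <= d k) /\
    (forall s t, A s t -> exists k, a k < s < b k /\ c k < t < d k) /\
    (forall N, rsum N (fun k => (b k - a k) * (d k - c k)) <= T + eps).
Proof.
  intros [a [b [c [d [Hab [Hcov Hsum]]]]]] Heps.
  set (den := fun k => (2 * ((b k - a k) + (d k - c k)) + 4) * 2 ^ S k).
  assert (Hden : forall k, 8 <= den k).
  { intros k. unfold den. destruct (Hab k).
    assert (2 <= 2 ^ S k) by (simpl; pose proof (pow_R1_Rle 2 k); lra). nra. }
  set (e := fun k => Rmin 1 (eps / den k)).
  assert (He : forall k, 0 < e k <= 1 /\ e k * den k <= eps).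
  { intros k. pose proof (Hden k). unfold e. split; [split|].
    - apply Rmin_pos; [lra|]. apply Rdiv_lt_0_compat; lra.
    - apply Rmin_l.
    - assert (E : eps / den k * den k = eps) by (field; lra).
      pose proof (Rmin_r 1 (eps / den k)). nra. }
  exists (fun k => a k - e k), (fun k => b k + e k), (fun k => c k - e k), (fun k => d k + e k).
  split; [|split].
  - intros k. destruct (Hab k), (He k). lra.
  - intros s t Hst. destruct (Hcov s t Hst) as [k Hk]. exists k. destruct (He k). lra.
  - intros N.
    apply Rle_trans with (rsum N (fun k => (b k - a k) * (d k - c k) + eps * / 2 ^ S k)).
    + apply rsum_le. intros k _. destruct (Hab k) as [Hx Hy]. destruct (He k) as [[He0 He1] Hed].
      assert (Hp : 0 < 2 ^ S k) by (apply pow_lt; lra).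
      assert (Hgrow : e k * (2 * ((b k - a k) + (d k - c k)) + 4) <= eps * / 2 ^ S k).
      { apply Rmult_le_reg_r with (2 ^ S k); auto.
        rewrite (Rmult_assoc eps), Rinv_l, Rmult_1_r by lra. unfold den in Hed. lra. }
      nra.
    + rewrite rsum_plus, rsum_scal, rsum_geometric_half.
      assert (rsum N (fun k => (b k - a k) * (d k - c k)) <= T).
      { apply rsum_le_infinite_sum; auto. intros k; destruct (Hab k); nra. }
      assert (0 < / 2 ^ N) by (apply Rinv_0_lt_compat, pow_lt; lra). nra.
Qed.

Lemma open_rectangle_nbhd a b c d x y : a < x < b /\ c < y < d ->
  exists e, 0 < e /\ forall x' y', Rabs (x' - x) < e -> Rabs (y' - y) < e ->
    a < x' < b /\ c < y' < d.
Proof.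
  intros [[h1 h2] [h3 h4]].
  exists (Rmin (Rmin (x - a) (b - x)) (Rmin (y - c) (d - y))).
  split; [repeat apply Rmin_pos; lra|].
  intros x' y' Hx Hy. apply Rabs_def2 in Hx. apply Rabs_def2 in Hy.
  pose proof (Rmin_l (Rmin (x - a) (b - x)) (Rmin (y - c) (d - y))).
  pose proof (Rmin_r (Rmin (x - a) (b - x)) (Rmin (y - c) (d - y))).
  pose proof (Rmin_l (x - a) (b - x)). pose proof (Rmin_r (x - a) (b - x)).
  pose proof (Rmin_l (y - c) (d - y)). pose proof (Rmin_r (y - c) (d - y)).
  lra.
Qed.

Lemma cells_finite_subcover n h del sel (A : R -> R -> Prop) (a b c d : nat -> R) :
  0 < del -> 2 * del < h ->
  (forall i j s t, (i < n)%nat -> (j < n)%nat -> sel i j = true ->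
     INR i * h <= s < (INR i + 1) * h -> INR j * h <= t < (INR j + 1) * h -> A s t) ->
  (forall s t, A s t -> exists k, a k < s < b k /\ c k < t < d k) ->
  exists N, cells_covered n N h del sel a b c d.
Proof.
  intros Hdel Hh HA Hcov.
  set (U := fun k x y => a k < x < b k /\ c k < y < d k).
  assert (Hopen : forall k x y, U k x y -> exists e, 0 < e /\
      forall x' y', Rabs (x' - x) < e -> Rabs (y' - y) < e -> U k x' y')
    by (intros; now apply open_rectangle_nbhd).
  set (covered_by := fun i j N => sel i j = true ->
        forall x y, INR i * h + del <= x <= (INR i + 1) * h - del ->
        INR j * h + del <= y <= (INR j + 1) * h - del -> exists k, (k < N)%nat /\ U k x y).
  assert (Hmono : forall i j N N', (N <= N')%nat -> covered_by i j N -> covered_by i j N').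
  { intros i j N N' HN Hc Hs x y Hx Hy. destruct (Hc Hs x y Hx Hy) as [k [Hk Uk]].
    exists k; split; auto; lia. }
  assert (Hcell : forall i j, (i < n)%nat -> (j < n)%nat -> exists N, covered_by i j N).
  { intros i j Hi Hj. destruct (sel i j) eqn:Hs; [|exists O; intros Hs'; congruence].
    destruct (rectangle_finite_subcover (INR i * h + del) ((INR i + 1) * h - del)
       (INR j * h + del) ((INR j + 1) * h - del) U) as [N HN]; try lra; auto.
    - intros x y Hx Hy. apply Hcov, (HA i j); auto; lra.
    - exists N. intros _. exact HN. }
  destruct (finite_common_bound n (fun i N => forall j, (j < n)%nat -> covered_by i j N))
    as [N HN].
  { intros i N N' HNN' Hc j Hj. apply Hmono with N; auto. }
  { intros i Hi. apply (finite_common_bound n (covered_by i)); auto.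
    intros j N N'. apply Hmono. }
  exists N. intros i j x y Hi Hj Hs Hx Hy.
  destruct (HN i Hi j Hj Hs x y Hx Hy) as [k [Hk [Hxk Hyk]]].
  exists k. repeat split; auto; lra.
Qed.

Lemma grid_area_le_cover_sum n h sel (A : R -> R -> Prop) T :
  0 < h ->
  (forall i j s t, (i < n)%nat -> (j < n)%nat -> sel i j = true ->
     INR i * h <= s < (INR i + 1) * h -> INR j * h <= t < (INR j + 1) * h -> A s t) ->
  rect_cover_sum A T ->
  h ^ 2 * rsum2 n (fun i j => b2r (sel i j)) <= T.
Proof.
  intros Hh HA Hc. set (C := rsum2 n (fun i j => b2r (sel i j))).
  assert (HC : 0 <= C) by apply rsum2_b2r_nonneg.
  assert (Hshrunk : forall del eps, 0 < del -> 4 * del <= h -> 0 < eps ->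
            (h - 2 * del) ^ 2 * C <= T + eps).
  { intros del eps Hdel Hdelh Heps.
    destruct (rect_cover_sum_open_enlargement A T eps Hc Heps)
      as [a [b [c [d [Hab [Hcov Hsum]]]]]].
    destruct (cells_finite_subcover n h del sel A a b c d) as [N HN]; auto; try lra.
    eapply Rle_trans; [apply (grid_area_le_finite_cover n N); auto; lra|apply Hsum]. }
  apply Rle_plus_epsilon. intros eps Heps.
  set (del := Rmin (h / 4) (eps / (8 * h * C + 1))).
  assert (Hdel : 0 < del) by (apply Rmin_pos; apply Rdiv_lt_0_compat; nra).
  assert (Hdel1 : del <= h / 4) by apply Rmin_l.
  assert (Hdel2 : del * (8 * h * C + 1) <= eps).
  { pose proof (Rmin_r (h / 4) (eps / (8 * h * C + 1))).
    assert (E : eps / (8 * h * C + 1) * (8 * h * C + 1) = eps) by (field; nra).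
    fold del in H. nra. }
  pose proof (Hshrunk del (eps / 2) Hdel ltac:(lra) ltac:(lra)).
  assert (h ^ 2 * C <= (h - 2 * del) ^ 2 * C + 4 * h * del * C) by nra.
  nra.
Qed.

(** * Outer measure and Euclidean distance *)

Lemma rect_cover_sum_nonneg A T : rect_cover_sum A T -> 0 <= T.
Proof.
  intros [a [b [c [d [Hab [_ Hs]]]]]].
  apply (rsum_le_infinite_sum _ _ O Hs). intros k; destruct (Hab k); nra.
Qed.

Lemma lebesgue2_nonneg A m : lebesgue2 A m -> 0 <= m.
Proof. intros [_ Hm]. apply Hm, rect_cover_sum_nonneg. Qed.

Lemma lebesgue2_mono (A B : R -> R -> Prop) mA mB :
  (forall s t, A s t -> B s t) -> lebesgue2 A mA -> lebesgue2 B mB -> mA <= mB.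
Proof.
  intros HAB [HA _] [_ HB]. apply HB. intros T [a [b [c [d [H1 [H2 H3]]]]]].
  apply HA. exists a, b, c, d. auto.
Qed.

Lemma lebesgue2_exists (A : R -> R -> Prop) :
  (exists T, rect_cover_sum A T) -> { m | lebesgue2 A m }.
Proof.
  intros Hex.
  set (E := fun x => exists T, rect_cover_sum A T /\ x = - T).
  destruct (completeness E) as [l [Hub Hlub]].
  { exists 0. intros x [T [Hc ->]]. pose proof (rect_cover_sum_nonneg A T Hc). lra. }
  { destruct Hex as [T HT]. exists (- T), T. auto. }
  exists (- l). split.
  - intros T Hc. assert (- T <= l) by (apply Hub; exists T; auto). lra.
  - intros m' Hm'. enough (l <= - m') by lra. apply Hlub.
    intros x [T [Hc ->]]. specialize (Hm' T Hc). lra.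
Qed.

Lemma rect_cover_sum_finite (A : R -> R -> Prop) N (a b c d : nat -> R) :
  (forall k, a k <= b k /\ c k <= d k) ->
  (forall s t, A s t -> exists k, (k < N)%nat /\ a k <= s <= b k /\ c k <= t <= d k) ->
  rect_cover_sum A (rsum N (fun k => (b k - a k) * (d k - c k))).
Proof.
  intros Hab Hc.
  set (cut := fun (f : nat -> R) k => if Nat.ltb k N then f k else 0).
  assert (Hin : forall f k, (k < N)%nat -> cut f k = f k).
  { intros f k Hk. unfold cut. now rewrite (proj2 (Nat.ltb_lt k N) Hk). }
  assert (Hout : forall f k, (N <= k)%nat -> cut f k = 0).
  { intros f k Hk. unfold cut. now rewrite (proj2 (Nat.ltb_ge k N) Hk). }
  exists (cut a), (cut b), (cut c), (cut d). split; [|split].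
  - intros k; unfold cut; destruct (Nat.ltb k N); auto; lra.
  - intros s t Hst. destruct (Hc s t Hst) as [k [Hk H]]. exists k. rewrite !Hin; auto.
  - intros eps Heps. exists N. intros n Hn.
    rewrite <- rsum_sum_f_R0. replace (S n) with (N + (S n - N))%nat by lia.
    rewrite rsum_add_range, (rsum_ext (S n - N) _ (fun _ => 0)), rsum_const.
    2:{ intros j _. rewrite !Hout by lia. ring. }
    rewrite (rsum_ext N _ (fun k => (b k - a k) * (d k - c k))).
    2:{ intros k Hk. rewrite !Hin; auto. }
    unfold Rdist. replace (_ + _ - _) with 0 by ring. rewrite Rabs_R0. lra.
Qed.

Lemma sqrt_le_of_le_sq x y : 0 <= y -> x <= y * y -> sqrt x <= y.
Proof.
  intros Hy Hx. destruct (Rle_dec 0 x).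
  - rewrite <- (sqrt_square y) by auto. apply sqrt_le_1; nra.
  - rewrite sqrt_neg_0 by lra. lra.
Qed.

Lemma dist2_nonneg a b c d : 0 <= dist2 a b c d.
Proof. apply sqrt_pos. Qed.

Lemma dist2_sq a b c d : dist2 a b c d * dist2 a b c d = (a - c) ^ 2 + (b - d) ^ 2.
Proof. apply sqrt_sqrt. pose proof (pow2_ge_0 (a - c)); pose proof (pow2_ge_0 (b - d)); lra. Qed.

Lemma dist2_le_abs a b c d : dist2 a b c d <= Rabs (a - c) + Rabs (b - d).
Proof.
  pose proof (Rabs_pos (a - c)); pose proof (Rabs_pos (b - d)).
  apply sqrt_le_of_le_sq; [lra|].
  rewrite <- (pow2_abs (a - c)), <- (pow2_abs (b - d)). nra.
Qed.

Lemma dist2_triangle a b c d e f : dist2 a b e f <= dist2 a b c d + dist2 c d e f.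
Proof.
  pose proof (dist2_sq a b c d) as H1. pose proof (dist2_sq c d e f) as H2.
  pose proof (dist2_nonneg a b c d). pose proof (dist2_nonneg c d e f).
  set (u := dist2 a b c d) in *. set (v := dist2 c d e f) in *.
  assert (Hcs : (a - c) * (c - e) + (b - d) * (d - f) <= u * v).
  { assert (((a - c) * (c - e) + (b - d) * (d - f)) ^ 2 <= (u * v) ^ 2).
    { replace ((u * v) ^ 2) with ((u * u) * (v * v)) by ring. rewrite H1, H2.
      pose proof (pow2_ge_0 ((a - c) * (d - f) - (b - d) * (c - e))). nra. }
    assert (0 <= u * v) by nra. nra. }
  apply sqrt_le_of_le_sq; [lra|]. nra.
Qed.

Lemma pow2_dist2 a b c d : dist2 a b c d ^ 2 = (a - c) ^ 2 + (b - d) ^ 2.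
Proof. rewrite <- dist2_sq. ring. Qed.

(** * The distance distribution and its grid approximations *)

Definition chord (gx gy : R -> R) (s t : R) : R := dist2 (gx s) (gy s) (gx t) (gy t).

Definition grid_pt (L : R) (n i : nat) : R := INR i * (L / INR n).

Definition grid_chord gx gy L n i j : R := chord gx gy (grid_pt L n i) (grid_pt L n j).

Definition grid_close gx gy L n r i j : bool :=
  if Rle_dec (grid_chord gx gy L n i j) r then true else false.

Definition grid_distr gx gy L n r : R :=
  rsum2 n (fun i j => b2r (grid_close gx gy L n r i j)) / INR n ^ 2.

Lemma grid_cell_of (n : nat) (h s : R) :
  0 <= s < INR n * h -> exists i, (i < n)%nat /\ INR i * h <= s <= (INR i + 1) * h.
Proof.
  induction n; intros [H1 H2]; [simpl in H2; lra|].
  rewrite S_INR in H2. destruct (Rlt_dec s (INR n * h)).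
  - destruct IHn as [i [Hi Hs]]; [lra|]. exists i; split; auto.
  - exists n; split; auto. lra.
Qed.

Lemma div_mod_pair n i j : (j < n)%nat -> ((i * n + j) / n = i /\ (i * n + j) mod n = j)%nat.
Proof.
  intros Hj. split.
  - rewrite Nat.div_add_l, Nat.div_small by lia. lia.
  - rewrite Nat.add_comm, Nat.Div0.mod_add. apply Nat.mod_small; auto.
Qed.

Section DistanceDistribution.

Variables (gx gy : R -> R) (L : R).
Hypothesis HL : 0 < L.

Lemma close_pairs_square_cover r : rect_cover_sum (close_pairs gx gy L r) (L * L).
Proof.
  replace (L * L) with (rsum 1 (fun _ => (L - 0) * (L - 0))) by (simpl; ring).
  apply rect_cover_sum_finite; [intros; lra|].
  intros s t [Hs [Ht _]]. exists O. split; [lia|lra].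
Qed.

Definition pair_measure (r : R) : R :=
  proj1_sig (lebesgue2_exists _ (ex_intro _ (L * L) (close_pairs_square_cover r))).

Lemma pair_measure_spec r : lebesgue2 (close_pairs gx gy L r) (pair_measure r).
Proof. unfold pair_measure. destruct lebesgue2_exists as [m Hm]. exact Hm. Qed.

Definition distr (r : R) : R := pair_measure r / L ^ 2.

Lemma distr_spec r : dist_distr gx gy L r (distr r).
Proof. exists (pair_measure r). split; [apply pair_measure_spec|reflexivity]. Qed.

Lemma distr_bounds r : 0 <= distr r <= 1.
Proof.
  pose proof (lebesgue2_nonneg _ _ (pair_measure_spec r)).
  pose proof (proj1 (pair_measure_spec r) _ (close_pairs_square_cover r)).
  assert (0 < L ^ 2) by (apply pow_lt; lra).
  unfold distr. split.
  - apply Rmult_le_pos; [lra|left; now apply Rinv_0_lt_compat].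
  - apply Rmult_le_reg_r with (L ^ 2); auto.
    unfold Rdiv. rewrite Rmult_assoc, Rinv_l by lra. simpl. lra.
Qed.

Lemma distr_mono r r' : r <= r' -> distr r <= distr r'.
Proof.
  intros H. unfold distr, Rdiv. apply Rmult_le_compat_r.
  - left; apply Rinv_0_lt_compat, pow_lt; lra.
  - apply (lebesgue2_mono (close_pairs gx gy L r) (close_pairs gx gy L r'));
      try apply pair_measure_spec.
    intros s t [H1 [H2 H3]]. repeat split; try lra.
Qed.

Lemma distr_neg r : r < 0 -> distr r = 0.
Proof.
  intros Hr.
  assert (Hempty : rect_cover_sum (close_pairs gx gy L r)
                     (rsum 0 (fun _ => (0 - 0) * (0 - 0)))).
  { apply rect_cover_sum_finite; [intros; lra|].
    intros s t [_ [_ Hd]]. pose proof (dist2_nonneg (gx s) (gy s) (gx t) (gy t)). lra. }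
  pose proof (proj1 (pair_measure_spec r) _ Hempty).
  pose proof (lebesgue2_nonneg _ _ (pair_measure_spec r)).
  unfold distr. simpl in *. replace (pair_measure r) with 0 by lra. unfold Rdiv. ring.
Qed.

Hypothesis Lx : forall s t, Rabs (gx s - gx t) <= Rabs (s - t).
Hypothesis Ly : forall s t, Rabs (gy s - gy t) <= Rabs (s - t).

Lemma chord_le s s' : chord gx gy s s' <= 2 * Rabs (s - s').
Proof.
  eapply Rle_trans; [apply dist2_le_abs|]. pose proof (Lx s s'); pose proof (Ly s s'); lra.
Qed.

Lemma chord_lipschitz s t s' t' :
  chord gx gy s t <= chord gx gy s' t' + 2 * Rabs (s - s') + 2 * Rabs (t - t').
Proof.
  unfold chord.
  eapply Rle_trans; [apply (dist2_triangle _ _ (gx s') (gy s'))|].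
  eapply Rle_trans; [apply Rplus_le_compat_l, (dist2_triangle _ _ (gx t') (gy t'))|].
  pose proof (chord_le s s'). pose proof (chord_le t' t).
  rewrite Rabs_minus_sym in H0. unfold chord in *. lra.
Qed.

Section Grid.

Variable n : nat.
Hypothesis Hn : (1 <= n)%nat.

Let h := L / INR n.

Lemma grid_step_pos : 0 < h.
Proof. apply Rdiv_lt_0_compat; auto. apply lt_0_INR; lia. Qed.

Lemma grid_step_total : INR n * h = L.
Proof. unfold h. field. apply not_0_INR; lia. Qed.

Lemma pair_measure_le_grid_count r :
  pair_measure (r - 4 * h) <= h ^ 2 * rsum2 n (fun i j => b2r (grid_close gx gy L n r i j)).
Proof.
  pose proof grid_step_pos as Hh. pose proof grid_step_total as Hnh.
  set (sel := grid_close gx gy L n r).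
  (* Rectangle [i * n + j] is the closed cell [(i, j)] if it is selected, degenerate if not. *)
  set (cell := fun (k : nat) (lo : bool) (x : nat) =>
         if sel (k / n)%nat (k mod n)%nat then (INR x + (if lo then 0 else 1)) * h else 0).
  set (a := fun k => cell k true (k / n)%nat). set (b := fun k => cell k false (k / n)%nat).
  set (c := fun k => cell k true (k mod n)%nat). set (d := fun k => cell k false (k mod n)%nat).
  assert (Hcov : rect_cover_sum (close_pairs gx gy L (r - 4 * h))
                   (rsum (n * n) (fun k => (b k - a k) * (d k - c k)))).
  { apply rect_cover_sum_finite.
    - intros k. unfold a, b, c, d, cell. destruct (sel _ _); lra.
    - intros s t [Hs [Ht Hd]].
      destruct (grid_cell_of n h s) as [i [Hi Hsi]]; [lra|].
      destruct (grid_cell_of n h t) as [j [Hj Htj]]; [lra|].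
      exists (i * n + j)%nat. split; [nia|].
      destruct (div_mod_pair n i j Hj) as [E1 E2].
      assert (Hsel : sel i j = true).
      { unfold sel, grid_close. destruct Rle_dec as [|Hno]; auto. exfalso; apply Hno.
        pose proof (chord_lipschitz (grid_pt L n i) (grid_pt L n j) s t).
        assert (Rabs (grid_pt L n i - s) <= h) by (apply Rabs_le; unfold grid_pt; fold h; lra).
        assert (Rabs (grid_pt L n j - t) <= h) by (apply Rabs_le; unfold grid_pt; fold h; lra).
        unfold grid_chord, chord in *. lra. }
      unfold a, b, c, d, cell. rewrite E1, E2, Hsel. lra. }
  eapply Rle_trans; [apply (proj1 (pair_measure_spec _) _ Hcov)|].
  rewrite rsum_blocks, <- rsum2_scal. apply Req_le, rsum2_ext. intros i j _ Hj.
  destruct (div_mod_pair n i j Hj) as [E1 E2].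
  unfold a, b, c, d, cell. rewrite E1, E2. destruct (sel i j); simpl; ring.
Qed.

Lemma grid_count_le_pair_measure r :
  h ^ 2 * rsum2 n (fun i j => b2r (grid_close gx gy L n r i j)) <= pair_measure (r + 4 * h).
Proof.
  pose proof grid_step_pos as Hh. pose proof grid_step_total as Hnh.
  apply (proj2 (pair_measure_spec _)). intros T HT.
  apply (grid_area_le_cover_sum n h _ (close_pairs gx gy L (r + 4 * h))); auto.
  intros i j s t Hi Hj Hs Hsi Htj.
  assert (INR i + 1 <= INR n) by (rewrite <- S_INR; apply le_INR; lia).
  assert (INR j + 1 <= INR n) by (rewrite <- S_INR; apply le_INR; lia).
  pose proof (pos_INR i). pose proof (pos_INR j).
  repeat split; try nra.
  unfold grid_close in Hs. destruct Rle_dec as [Hd|]; [|discriminate].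
  pose proof (chord_lipschitz s t (grid_pt L n i) (grid_pt L n j)).
  assert (Rabs (s - grid_pt L n i) <= h) by (apply Rabs_le; unfold grid_pt; fold h; lra).
  assert (Rabs (t - grid_pt L n j) <= h) by (apply Rabs_le; unfold grid_pt; fold h; lra).
  unfold grid_chord, chord in *. lra.
Qed.

Lemma grid_distr_between r :
  distr (r - 4 * h) <= grid_distr gx gy L n r <= distr (r + 4 * h).
Proof.
  pose proof grid_step_pos as Hh. pose proof grid_step_total as Hnh.
  assert (HnR : 0 < INR n) by (apply lt_0_INR; lia).
  assert (E : grid_distr gx gy L n r
              = h ^ 2 * rsum2 n (fun i j => b2r (grid_close gx gy L n r i j)) / L ^ 2).
  { unfold grid_distr. rewrite <- Hnh. field. lra. }
  rewrite E. unfold distr. assert (0 < / L ^ 2) by (apply Rinv_0_lt_compat, pow_lt; lra).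
  split; apply Rmult_le_compat_r; try lra.
  - apply pair_measure_le_grid_count.
  - apply grid_count_le_pair_measure.
Qed.

End Grid.
End DistanceDistribution.

(** * Comparing grid means through the distance distribution *)

Definition grid_mean gx gy L n (phi : R -> R) : R :=
  rsum2 n (fun i j => phi (grid_chord gx gy L n i j)) / INR n ^ 2.

Definition exceeds (D r : R) : R := if Rle_dec D r then 0 else 1.

Definition mesh_incr (phi : R -> R) (tau : R) (k : nat) : R :=
  phi ((INR k + 1) * tau) - phi (INR k * tau).

Section LayerCake.

Variables (phi : R -> R) (tau : R).
Hypothesis Hphi0 : phi 0 = 0.
Hypothesis Hmono : forall x y, 0 <= x <= y -> phi x <= phi y.
Hypothesis Htau : 0 < tau.

(* Layer-cake discretization of [phi D] on the mesh [k * tau]. *)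
Definition layer_sum (K : nat) (D : R) : R :=
  rsum K (fun k => mesh_incr phi tau k * exceeds D (INR k * tau)).

Lemma layer_sum_full K D : INR K * tau - tau < D -> layer_sum K D = phi (INR K * tau).
Proof.
  intros HD. unfold layer_sum.
  rewrite (rsum_ext K _ (fun k => phi (INR (S k) * tau) - phi (INR k * tau))).
  - rewrite (rsum_telescope (fun k => phi (INR k * tau))). simpl INR.
    rewrite Rmult_0_l, Hphi0. ring.
  - intros k Hk. unfold mesh_incr, exceeds. rewrite S_INR.
    assert (INR k + 1 <= INR K) by (rewrite <- S_INR; apply le_INR; lia).
    destruct Rle_dec; [nra|ring].
Qed.

Lemma layer_sum_step K D : D <= INR K * tau -> layer_sum (S K) D = layer_sum K D.
Proof.
  intros HD. unfold layer_sum. cbn [rsum]. unfold exceeds at 2.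
  destruct Rle_dec; [ring|contradiction].
Qed.

Lemma layer_sum_ge K D : 0 <= D -> D <= INR K * tau -> phi D <= layer_sum K D.
Proof.
  induction K as [|K IH]; intros HD0 HD.
  - simpl in HD. replace D with 0 by lra. rewrite Hphi0. unfold layer_sum; simpl; lra.
  - destruct (Rle_dec D (INR K * tau)).
    + rewrite layer_sum_step; auto.
    + rewrite layer_sum_full by (rewrite S_INR; lra). apply Hmono. lra.
Qed.

Lemma layer_sum_le K D Dl : 0 <= D -> 0 <= Dl ->
  (forall k, (k < K)%nat -> mesh_incr phi tau k <= Dl) -> layer_sum K D <= phi D + Dl.
Proof.
  induction K as [|K IH]; intros HD0 HDl0 HDl.
  - assert (phi 0 <= phi D) by (apply Hmono; lra). unfold layer_sum; simpl. lra.
  - destruct (Rle_dec D (INR K * tau)).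
    + rewrite layer_sum_step; auto.
    + rewrite layer_sum_full by (rewrite S_INR; lra).
      assert (phi (INR K * tau) <= phi D).
      { apply Hmono. pose proof (pos_INR K). split; [nra|lra]. }
      specialize (HDl K (Nat.lt_succ_diag_r K)). unfold mesh_incr in HDl. rewrite S_INR. lra.
Qed.

Lemma rsum2_exceeds gx gy L n r :
  rsum2 n (fun i j => exceeds (grid_chord gx gy L n i j) r)
  = INR n ^ 2 - rsum2 n (fun i j => b2r (grid_close gx gy L n r i j)).
Proof.
  rewrite <- (Rmult_1_r (INR n ^ 2)), <- rsum2_const, <- rsum2_minus.
  apply rsum2_ext. intros i j _ _. unfold exceeds, grid_close. destruct Rle_dec; simpl; ring.
Qed.

Lemma grid_mean_layer_bounds gx gy L n K Dl :
  (1 <= n)%nat -> 0 <= Dl -> (forall k, (k < K)%nat -> mesh_incr phi tau k <= Dl) ->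
  (forall i j, (i < n)%nat -> (j < n)%nat -> grid_chord gx gy L n i j <= INR K * tau) ->
  grid_mean gx gy L n phi
  <= rsum K (fun k => mesh_incr phi tau k * (1 - grid_distr gx gy L n (INR k * tau)))
  <= grid_mean gx gy L n phi + Dl.
Proof.
  intros Hn HDl0 HDl HD.
  set (T := rsum K (fun k => mesh_incr phi tau k * (1 - grid_distr gx gy L n (INR k * tau)))).
  assert (HnR : 0 < INR n) by (apply lt_0_INR; lia).
  assert (Hn2 : 0 < INR n ^ 2) by (apply pow_lt; lra).
  assert (ET : T = rsum2 n (fun i j => layer_sum K (grid_chord gx gy L n i j)) / INR n ^ 2).
  { unfold T, layer_sum. rewrite rsum2_rsum_swap. unfold Rdiv.
    rewrite Rmult_comm, <- rsum_scal. apply rsum_ext. intros k _.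
    rewrite rsum2_scal, rsum2_exceeds. unfold grid_distr. field. lra. }
  assert (Hchord : forall i j, 0 <= grid_chord gx gy L n i j) by (intros; apply dist2_nonneg).
  rewrite ET. unfold grid_mean. split.
  - apply Rmult_le_compat_r; [left; now apply Rinv_0_lt_compat|].
    apply rsum2_le. intros. apply layer_sum_ge; auto.
  - replace (rsum2 n (fun i j => phi (grid_chord gx gy L n i j)) / INR n ^ 2 + Dl)
      with (rsum2 n (fun i j => phi (grid_chord gx gy L n i j) + Dl) / INR n ^ 2)
      by (rewrite rsum2_plus, rsum2_const; field; lra).
    apply Rmult_le_compat_r; [left; now apply Rinv_0_lt_compat|].
    apply rsum2_le. intros. apply layer_sum_le; auto.
Qed.

(* The windows [[k tau - tau, k tau + tau]] cover each point at most twice, so the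
   increments of [H] over them add up to at most [2]. *)
Lemma layer_sums_close (H G1 G2 : R -> R) K Dl :
  0 <= Dl -> (forall x y, x <= y -> H x <= H y) -> (forall x, 0 <= H x <= 1) ->
  (forall k, (k < K)%nat -> 0 <= mesh_incr phi tau k <= Dl) ->
  (forall r, H (r - tau) <= G1 r <= H (r + tau)) ->
  (forall r, H (r - tau) <= G2 r <= H (r + tau)) ->
  Rabs (rsum K (fun k => mesh_incr phi tau k * (1 - G1 (INR k * tau)))
        - rsum K (fun k => mesh_incr phi tau k * (1 - G2 (INR k * tau)))) <= 2 * Dl.
Proof.
  intros HDl HHm HH01 Hincr HG1 HG2.
  set (window := fun k : nat => H (INR k * tau + tau) - H (INR k * tau - tau)).
  assert (Hwin : rsum K window <= 2).
  { replace (rsum K window)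
      with (rsum K (fun k => H (INR (S k) * tau) - H (INR k * tau))
            + rsum K (fun k => H (INR (S k) * tau - tau) - H (INR k * tau - tau))).
    2:{ rewrite <- rsum_plus. apply rsum_ext. intros k _. unfold window. rewrite S_INR.
        replace ((INR k + 1) * tau) with (INR k * tau + tau) by ring.
        replace (INR k * tau + tau - tau) with (INR k * tau) by ring. ring. }
    rewrite (rsum_telescope (fun k => H (INR k * tau))),
            (rsum_telescope (fun k => H (INR k * tau - tau))).
    pose proof (HH01 (INR K * tau)). pose proof (HH01 (INR K * tau - tau)).
    pose proof (HH01 (INR 0 * tau)). pose proof (HH01 (INR 0 * tau - tau)). lra. }
  rewrite <- rsum_minus. eapply Rle_trans; [apply rsum_abs|].
  apply Rle_trans with (rsum K (fun k => Dl * window k)).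
  - apply rsum_le. intros k Hk. specialize (Hincr k Hk).
    pose proof (HG1 (INR k * tau)). pose proof (HG2 (INR k * tau)).
    assert (H (INR k * tau - tau) <= H (INR k * tau + tau)) by (apply HHm; lra).
    replace (mesh_incr phi tau k * (1 - G1 (INR k * tau))
             - mesh_incr phi tau k * (1 - G2 (INR k * tau)))
      with (mesh_incr phi tau k * (G2 (INR k * tau) - G1 (INR k * tau))) by ring.
    rewrite Rabs_mult, (Rabs_pos_eq (mesh_incr phi tau k)) by lra. unfold window.
    apply Rmult_le_compat; try lra; [apply Rabs_pos|apply Rabs_le; lra].
  - rewrite rsum_scal. nra.
Qed.

End LayerCake.

Section GridMeans.

Variables (gx gy : R -> R) (L : R).
Hypothesis HL : 0 < L.
Hypothesis Lx : forall s t, Rabs (gx s - gx t) <= Rabs (s - t).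
Hypothesis Ly : forall s t, Rabs (gy s - gy t) <= Rabs (s - t).

Lemma grid_pt_range n i : (i < n)%nat -> 0 <= grid_pt L n i <= L.
Proof.
  intros Hi. assert (HnR : 0 < INR n) by (apply lt_0_INR; lia).
  assert (INR i <= INR n) by (apply le_INR; lia). pose proof (pos_INR i).
  assert (E : INR n * (L / INR n) = L) by (field; lra).
  assert (0 < L / INR n) by (apply Rdiv_lt_0_compat; lra).
  unfold grid_pt. split; nra.
Qed.

Lemma grid_chord_le n i j : (i < n)%nat -> (j < n)%nat -> grid_chord gx gy L n i j <= 2 * L.
Proof.
  intros Hi Hj. eapply Rle_trans; [apply chord_le; auto|].
  pose proof (grid_pt_range n i Hi). pose proof (grid_pt_range n j Hj).
  assert (Rabs (grid_pt L n i - grid_pt L n j) <= L) by (apply Rabs_le; lra). lra.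
Qed.

Lemma grid_distr_within n tau r : (1 <= n)%nat -> 4 * (L / INR n) <= tau ->
  distr gx gy L HL (r - tau) <= grid_distr gx gy L n r <= distr gx gy L HL (r + tau).
Proof.
  intros Hn Htau. destruct (grid_distr_between gx gy L HL Lx Ly n Hn r).
  pose proof (distr_mono gx gy L HL (r - tau) (r - 4 * (L / INR n))).
  pose proof (distr_mono gx gy L HL (r + 4 * (L / INR n)) (r + tau)).
  split; [apply Rle_trans with (distr gx gy L HL (r - 4 * (L / INR n)))
         |apply Rle_trans with (distr gx gy L HL (r + 4 * (L / INR n)))]; auto; lra.
Qed.

End GridMeans.

(* Both grid means are within [Dl] of [sum_k mesh_incr k * (1 - G (k tau))], and the two
   empirical distributions [G] are squeezed by the same [H]. *)
Lemma grid_mean_diff_le gx gy L gx' gy' L' (phi : R -> R) tau K n Dl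
  (HL : 0 < L) (HL' : 0 < L') :
  (forall s t, Rabs (gx s - gx t) <= Rabs (s - t)) ->
  (forall s t, Rabs (gy s - gy t) <= Rabs (s - t)) ->
  (forall s t, Rabs (gx' s - gx' t) <= Rabs (s - t)) ->
  (forall s t, Rabs (gy' s - gy' t) <= Rabs (s - t)) ->
  (forall r, distr gx gy L HL r = distr gx' gy' L' HL' r) ->
  phi 0 = 0 -> (forall x y, 0 <= x <= y -> phi x <= phi y) -> 0 < tau ->
  (1 <= n)%nat -> 4 * (L / INR n) <= tau -> 4 * (L' / INR n) <= tau ->
  2 * L + 2 * L' <= INR K * tau -> 0 <= Dl ->
  (forall k, (k < K)%nat -> 0 <= mesh_incr phi tau k <= Dl) ->
  Rabs (grid_mean gx gy L n phi - grid_mean gx' gy' L' n phi) <= 3 * Dl.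
Proof.
  intros Lx Ly Lx' Ly' Hdistr Hphi0 Hmono Htau Hn Hfine Hfine' HK HDl Hincr.
  assert (Hincr' : forall k, (k < K)%nat -> mesh_incr phi tau k <= Dl)
    by (intros; apply Hincr; auto).
  destruct (grid_mean_layer_bounds phi tau Hphi0 Hmono Htau gx gy L n K Dl Hn HDl Hincr')
    as [H1 H2].
  { intros i j Hi Hj. pose proof (grid_chord_le gx gy L HL Lx Ly n i j Hi Hj). lra. }
  destruct (grid_mean_layer_bounds phi tau Hphi0 Hmono Htau gx' gy' L' n K Dl Hn HDl Hincr')
    as [H1' H2'].
  { intros i j Hi Hj. pose proof (grid_chord_le gx' gy' L' HL' Lx' Ly' n i j Hi Hj). lra. }
  assert (Hclose : Rabs
      (rsum K (fun k => mesh_incr phi tau k * (1 - grid_distr gx gy L n (INR k * tau)))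
       - rsum K (fun k => mesh_incr phi tau k * (1 - grid_distr gx' gy' L' n (INR k * tau))))
      <= 2 * Dl).
  { apply (layer_sums_close phi tau Htau (distr gx gy L HL)); auto.
    - intros; now apply distr_mono.
    - intros; now apply distr_bounds.
    - intros r. now apply grid_distr_within.
    - intros r. rewrite !Hdistr. now apply grid_distr_within. }
  apply Rabs_le_inv in Hclose. apply Rabs_le. lra.
Qed.

Lemma mesh_incr_bounds (phi : R -> R) Lam tau B K k :
  (forall x y, 0 <= x <= y -> phi x <= phi y) ->
  (forall x y, 0 <= x <= y -> y <= B + 1 -> phi y - phi x <= Lam * (y - x)) ->
  0 < tau -> tau <= 1 -> INR K * tau <= B + tau -> (k < K)%nat ->
  0 <= mesh_incr phi tau k <= Lam * tau.
Proof.
  intros Hmono HLip Htau Htau1 HK Hk. pose proof (pos_INR k). unfold mesh_incr.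
  assert (INR k + 1 <= INR K) by (rewrite <- S_INR; apply le_INR; lia).
  split.
  - assert (phi (INR k * tau) <= phi ((INR k + 1) * tau)) by (apply Hmono; split; nra). lra.
  - replace (Lam * tau) with (Lam * ((INR k + 1) * tau - INR k * tau)) by ring.
    apply HLip; nra.
Qed.

Lemma grid_mean_equidistributed gx gy L gx' gy' L' (phi : R -> R) Lam
  (HL : 0 < L) (HL' : 0 < L') :
  (forall s t, Rabs (gx s - gx t) <= Rabs (s - t)) ->
  (forall s t, Rabs (gy s - gy t) <= Rabs (s - t)) ->
  (forall s t, Rabs (gx' s - gx' t) <= Rabs (s - t)) ->
  (forall s t, Rabs (gy' s - gy' t) <= Rabs (s - t)) ->
  (forall r, distr gx gy L HL r = distr gx' gy' L' HL' r) ->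
  phi 0 = 0 -> (forall x y, 0 <= x <= y -> phi x <= phi y) -> 0 <= Lam ->
  (forall x y, 0 <= x <= y -> y <= 2 * L + 2 * L' + 1 -> phi y - phi x <= Lam * (y - x)) ->
  forall eps, 0 < eps -> exists N0, forall n, (N0 <= n)%nat -> (1 <= n)%nat ->
    Rabs (grid_mean gx gy L n phi - grid_mean gx' gy' L' n phi) <= eps.
Proof.
  intros Lx Ly Lx' Ly' Hdistr Hphi0 Hmono HLam HLip eps Heps.
  set (tau := Rmin 1 (eps / (3 * Lam + 1))).
  assert (Htau : 0 < tau) by (apply Rmin_pos; [lra|apply Rdiv_lt_0_compat; lra]).
  assert (Htau1 : tau <= 1) by apply Rmin_l.
  assert (HLt : 3 * (Lam * tau) <= eps).
  { pose proof (Rmin_r 1 (eps / (3 * Lam + 1))). fold tau in H.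
    assert (E : eps / (3 * Lam + 1) * (3 * Lam + 1) = eps) by (field; lra). nra. }
  destruct (nat_multiple_between (2 * L + 2 * L') tau) as [K [HK1 HK2]]; [lra|auto|].
  destruct (INR_unbounded (4 * (L + L') / tau)) as [N0 HN0].
  exists N0. intros n Hn Hn1.
  assert (HnR : 0 < INR n) by (apply lt_0_INR; lia).
  assert (HN0n : INR N0 <= INR n) by (apply le_INR; auto).
  assert (Hfine : 4 * (L / INR n) <= tau /\ 4 * (L' / INR n) <= tau).
  { assert (4 * (L + L') / tau * tau = 4 * (L + L')) by (field; lra).
    assert (4 * (L + L') < INR n * tau) by nra.
    assert (E1 : 4 * (L / INR n) * INR n = 4 * L) by (field; lra).
    assert (E2 : 4 * (L' / INR n) * INR n = 4 * L') by (field; lra).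
    split; apply (Rmult_le_reg_r (INR n)); auto; [rewrite E1|rewrite E2]; nra. }
  eapply Rle_trans; [|exact HLt].
  apply (grid_mean_diff_le gx gy L gx' gy' L' phi tau K n (Lam * tau) HL HL');
    try tauto; try nra.
  intros k Hk. apply (mesh_incr_bounds phi Lam tau (2 * L + 2 * L') K k); auto.
Qed.

(** * Moments of finite point sets and of the circle *)

Definition mean (n : nat) (f : nat -> R) : R := rsum n f / INR n.

Lemma INR_mult_mean n f : (1 <= n)%nat -> INR n * mean n f = rsum n f.
Proof. intros Hn. assert (0 < INR n) by (apply lt_0_INR; lia). unfold mean. field. lra. Qed.

Section Moments.

Variables (x y : nat -> R) (n : nat).
Hypothesis Hn : (1 <= n)%nat.

Definition centroid_dist2 (i : nat) : R := (x i - mean n x) ^ 2 + (y i - mean n y) ^ 2.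

Definition inertia : R := mean n centroid_dist2.

Definition inertia_var : R := mean n (fun i => (centroid_dist2 i - inertia) ^ 2).

Let u i := x i - mean n x.
Let v i := y i - mean n y.

Lemma rsum_centered (f : nat -> R) : rsum n (fun i => f i - mean n f) = 0.
Proof.
  assert (0 < INR n) by (apply lt_0_INR; lia).
  rewrite rsum_minus, rsum_const. unfold mean. field. lra.
Qed.

Lemma mean_pair_dist2 :
  rsum2 n (fun i j => (x i - x j) ^ 2 + (y i - y j) ^ 2) / INR n ^ 2 = 2 * inertia.
Proof.
  assert (0 < INR n) by (apply lt_0_INR; lia).
  assert (Hu : rsum n u = 0) by apply rsum_centered.
  assert (Hv : rsum n v = 0) by apply rsum_centered.
  rewrite (rsum2_ext n _ (fun i j =>
     centroid_dist2 i * 1 + 1 * centroid_dist2 j - 2 * (u i * u j) - 2 * (v i * v j))).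
  2:{ intros i j _ _. unfold centroid_dist2, u, v. ring. }
  rewrite !rsum2_minus, !rsum2_plus, !rsum2_mult, !rsum2_scal, !rsum2_mult, Hu, Hv.
  rewrite rsum_const.
  unfold inertia, mean. field. lra.
Qed.

(* The fourth moment equals [2 W + 6 V ^ 2 + 2 (A - B) ^ 2 + 8 C ^ 2] where
   [[A, C], [C, B]] is the covariance matrix of the points. *)
Lemma mean_pair_dist4_ge :
  2 * inertia_var + 6 * inertia ^ 2
  <= rsum2 n (fun i j => ((x i - x j) ^ 2 + (y i - y j) ^ 2) ^ 2) / INR n ^ 2.
Proof.
  assert (0 < INR n) by (apply lt_0_INR; lia).
  assert (Hu : rsum n u = 0) by apply rsum_centered.
  assert (Hv : rsum n v = 0) by apply rsum_centered.
  set (q := centroid_dist2).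
  set (A := mean n (fun i => u i ^ 2)). set (B := mean n (fun i => v i ^ 2)).
  set (C := mean n (fun i => u i * v i)).
  enough (E : rsum2 n (fun i j => ((x i - x j) ^ 2 + (y i - y j) ^ 2) ^ 2) / INR n ^ 2
              = 2 * inertia_var + 6 * inertia ^ 2 + 2 * (A - B) ^ 2 + 8 * C ^ 2).
  { rewrite E. pose proof (pow2_ge_0 (A - B)). pose proof (pow2_ge_0 C). lra. }
  rewrite (rsum2_ext n _ (fun i j =>
     q i ^ 2 * 1 + 2 * (q i * q j) + 1 * q j ^ 2
     - 4 * ((q i * u i) * u j) - 4 * (u i * (q j * u j))
     - 4 * ((q i * v i) * v j) - 4 * (v i * (q j * v j))
     + 4 * (u i ^ 2 * u j ^ 2) + 8 * ((u i * v i) * (u j * v j)) + 4 * (v i ^ 2 * v j ^ 2))).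
  2:{ intros i j _ _. unfold q, centroid_dist2, u, v. ring. }
  repeat (rewrite rsum2_plus || rewrite rsum2_minus).
  rewrite !rsum2_mult, !rsum2_scal, !rsum2_mult, Hu, Hv, !rsum_const.
  unfold inertia_var, inertia. fold q.
  assert (EW : mean n (fun i => (q i - mean n q) ^ 2)
               = mean n (fun i => q i ^ 2) - mean n q ^ 2).
  { unfold mean. rewrite (rsum_ext n _ (fun i => q i ^ 2 + (-2 * (rsum n q / INR n)) * q i
                                                 + (rsum n q / INR n) ^ 2)) by (intros; ring).
    rewrite !rsum_plus, rsum_scal, rsum_const. field. lra. }
  assert (Eq : rsum n q = rsum n (fun i => u i ^ 2) + rsum n (fun i => v i ^ 2))
    by (rewrite <- rsum_plus; reflexivity).
  rewrite EW. unfold A, B, C, mean. rewrite !Eq. field. lra.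
Qed.

End Moments.

(* Telescoping: [2 sin c cos (2 i c) = sin ((2 i + 1) c) - sin ((2 i - 1) c)], and similarly
   for [sin (2 i c)]; the boundary terms cancel since [2 n c] is a multiple of [2 PI]. *)
Lemma rsum_cos_sin_equally_spaced (c : R) (n m : nat) :
  sin c <> 0 -> INR n * c = INR m * PI ->
  rsum n (fun i => cos (2 * INR i * c)) = 0 /\ rsum n (fun i => sin (2 * INR i * c)) = 0.
Proof.
  intros Hs Hnc.
  set (t := fun k : nat => (2 * INR k - 1) * c).
  assert (Hend : t n = - c + 2 * INR m * PI).
  { unfold t. replace ((2 * INR n - 1) * c) with (2 * (INR n * c) - c) by ring.
    rewrite Hnc. ring. }
  assert (Hstart : t O = - c) by (unfold t; simpl; ring).
  assert (Hstep : forall i, t (S i) = 2 * INR i * c + c /\ t i = 2 * INR i * c - c)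
    by (intros; unfold t; rewrite S_INR; split; ring).
  split; apply (Rmult_eq_reg_l (2 * sin c)); try lra; rewrite Rmult_0_r, <- rsum_scal.
  - rewrite (rsum_ext n _ (fun i => sin (t (S i)) - sin (t i))).
    + rewrite (rsum_telescope (fun k => sin (t k))), Hend, Hstart, sin_period. ring.
    + intros i _. destruct (Hstep i) as [-> ->]. rewrite sin_plus, sin_minus. ring.
  - rewrite (rsum_ext n _ (fun i => (-1) * (cos (t (S i)) - cos (t i)))).
    + rewrite rsum_scal, (rsum_telescope (fun k => cos (t k))), Hend, Hstart, cos_period. ring.
    + intros i _. destruct (Hstep i) as [-> ->]. rewrite cos_plus, cos_minus. ring.
Qed.

Lemma circle_chord2 a b :
  dist2 (cos a) (sin a) (cos b) (sin b) ^ 2 = 2 - 2 * (cos a * cos b + sin a * sin b).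
Proof.
  rewrite pow2_dist2. pose proof (sin2_cos2 a). pose proof (sin2_cos2 b).
  unfold Rsqr in *. nra.
Qed.

Lemma circle_chord4 a b :
  dist2 (cos a) (sin a) (cos b) (sin b) ^ 4
  = 6 - 8 * (cos a * cos b) - 8 * (sin a * sin b)
    + 2 * (cos (2 * a) * cos (2 * b)) + 2 * (sin (2 * a) * sin (2 * b)).
Proof.
  replace (dist2 _ _ _ _ ^ 4) with ((dist2 (cos a) (sin a) (cos b) (sin b) ^ 2) ^ 2) by ring.
  assert (E1 : cos a * cos b + sin a * sin b = cos (a - b)) by (now rewrite cos_minus).
  assert (E2 : cos (2 * a) * cos (2 * b) + sin (2 * a) * sin (2 * b)
               = 2 * cos (a - b) * cos (a - b) - 1).
  { rewrite <- cos_minus, <- cos_2a_cos. f_equal. ring. }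
  rewrite circle_chord2, E1. nra.
Qed.

Lemma circle_grid_moments n : (3 <= n)%nat ->
  grid_mean cos sin (2 * PI) n (fun r => r ^ 2) = 2 /\
  grid_mean cos sin (2 * PI) n (fun r => r ^ 4) = 6.
Proof.
  intros Hn. pose proof PI_RGT_0.
  assert (HnR : 3 <= INR n) by (replace 3 with (INR 3) by (simpl; ring); now apply le_INR).
  set (c := PI / INR n).
  assert (Hc : 0 < c) by (apply Rdiv_lt_0_compat; lra).
  assert (Hc2 : 2 * c < PI).
  { apply (Rmult_lt_reg_r (INR n)); [lra|].
    replace (2 * c * INR n) with (2 * PI) by (unfold c; field; lra). nra. }
  assert (Hs1 : sin c <> 0) by (pose proof (sin_gt_0 c Hc ltac:(lra)); lra).
  assert (Hs2 : sin (2 * c) <> 0) by (pose proof (sin_gt_0 (2 * c) ltac:(lra) Hc2); lra).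
  destruct (rsum_cos_sin_equally_spaced c n 1 Hs1) as [Sc Ss].
  { unfold c; simpl; field; lra. }
  destruct (rsum_cos_sin_equally_spaced (2 * c) n 2 Hs2) as [Sc2 Ss2].
  { unfold c; simpl; field; lra. }
  set (th := fun i => 2 * INR i * c).
  assert (Hth : forall i, grid_pt (2 * PI) n i = th i)
    by (intros; unfold grid_pt, th, c; field; lra).
  assert (Hth2 : forall i, 2 * th i = 2 * INR i * (2 * c)) by (intros; unfold th; ring).
  unfold grid_mean, grid_chord, chord. split.
  - rewrite (rsum2_ext n _ (fun i j => 2 - 2 * (cos (th i) * cos (th j))
                                          - 2 * (sin (th i) * sin (th j)))).
    2:{ intros i j _ _. rewrite !Hth, circle_chord2. ring. }
    rewrite !rsum2_minus, !rsum2_scal, !rsum2_mult, rsum2_const. unfold th.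
    rewrite Sc, Ss. field. lra.
  - rewrite (rsum2_ext n _ (fun i j => 6 - 8 * (cos (th i) * cos (th j))
                 - 8 * (sin (th i) * sin (th j)) + 2 * (cos (2 * th i) * cos (2 * th j))
                 + 2 * (sin (2 * th i) * sin (2 * th j)))).
    2:{ intros i j _ _. rewrite !Hth. apply circle_chord4. }
    repeat (rewrite rsum2_plus || rewrite rsum2_minus).
    rewrite !rsum2_scal, !rsum2_mult, rsum2_const.
    rewrite !(rsum_ext n (fun i => cos (2 * th i)) (fun i => cos (2 * INR i * (2 * c))))
      by (intros; now rewrite Hth2).
    rewrite !(rsum_ext n (fun i => sin (2 * th i)) (fun i => sin (2 * INR i * (2 * c))))
      by (intros; now rewrite Hth2).
    unfold th. rewrite Sc, Ss, Sc2, Ss2. field. lra.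
Qed.

(** * Centroids of the samples and the conclusion *)

Definition grid_avg (f : R -> R) (L : R) (n : nat) : R := mean n (fun i => f (grid_pt L n i)).

Section GridAverages.

Variables (f : R -> R) (L : R).
Hypothesis HL : 0 < L.
Hypothesis Lf : forall s t, Rabs (f s - f t) <= Rabs (s - t).

(* Point [i * m + j] of the grid with [n * m] points lies within [L / n] to the right of
   point [i] of the grid with [n] points. *)
Lemma grid_avg_refine n m : (1 <= n)%nat -> (1 <= m)%nat ->
  Rabs (grid_avg f L n - grid_avg f L (n * m)) <= L / INR n.
Proof.
  intros Hn Hm.
  assert (HnR : 0 < INR n) by (apply lt_0_INR; lia).
  assert (HmR : 0 < INR m) by (apply lt_0_INR; lia).
  assert (E : grid_avg f L n
              = rsum n (fun i => rsum m (fun j => f (grid_pt L n i))) / (INR n * INR m)).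
  { unfold grid_avg, mean.
    rewrite (rsum_ext n (fun i => rsum m (fun j => f (grid_pt L n i)))
               (fun i => INR m * f (grid_pt L n i))) by (intros; apply rsum_const).
    rewrite rsum_scal. field. lra. }
  rewrite E. unfold grid_avg, mean. rewrite rsum_blocks, mult_INR.
  unfold Rdiv. rewrite <- Rmult_minus_distr_r, <- rsum_minus.
  rewrite (rsum_ext n _ (fun i => rsum m (fun j =>
             f (grid_pt L n i) - f (grid_pt L (n * m) (i * m + j)))))
    by (intros; symmetry; apply rsum_minus).
  rewrite Rabs_mult, (Rabs_pos_eq (/ _)) by (left; apply Rinv_0_lt_compat; nra).
  apply Rle_trans with (rsum n (fun i => rsum m (fun j => L / INR n)) * / (INR n * INR m)).
  - apply Rmult_le_compat_r; [left; apply Rinv_0_lt_compat; nra|].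
    eapply Rle_trans; [apply rsum_abs|]. apply rsum_le. intros i Hi.
    eapply Rle_trans; [apply rsum_abs|]. apply rsum_le. intros j Hj.
    eapply Rle_trans; [apply Lf|].
    assert (INR j + 1 <= INR m) by (rewrite <- S_INR; apply le_INR; lia).
    pose proof (pos_INR j).
    unfold grid_pt. rewrite mult_INR, plus_INR, mult_INR.
    replace (INR i * (L / INR n) - (INR i * INR m + INR j) * (L / (INR n * INR m)))
      with (- (INR j / INR m * (L / INR n))) by (field; lra).
    rewrite Rabs_Ropp, Rabs_pos_eq.
    + assert (INR j / INR m <= 1) by (apply Rmult_le_reg_r with (INR m); [lra|];
                                      unfold Rdiv; rewrite Rmult_assoc, Rinv_l; lra).
      assert (0 < L / INR n) by (apply Rdiv_lt_0_compat; lra). nra.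
    + apply Rmult_le_pos; apply Rmult_le_pos; try lra; left; apply Rinv_0_lt_compat; lra.
  - rewrite (rsum_ext n _ (fun _ => INR m * (L / INR n))) by (intros; apply rsum_const).
    rewrite rsum_const. right. field. lra.
Qed.

Lemma grid_avg_cauchy : Cauchy_crit (fun k => grid_avg f L (S k)).
Proof.
  intros eps Heps.
  destruct (INR_unbounded (2 * L / eps)) as [N HN].
  exists N. intros a b Ha Hb. unfold Rdist.
  pose proof (grid_avg_refine (S a) (S b) ltac:(lia) ltac:(lia)) as H1.
  pose proof (grid_avg_refine (S b) (S a) ltac:(lia) ltac:(lia)) as H2.
  rewrite Nat.mul_comm in H2.
  assert (Hsmall : forall k, (k >= N)%nat -> L / INR (S k) < eps / 2).
  { intros k Hk. assert (HkR : INR N < INR (S k)) by (apply lt_INR; lia). pose proof (pos_INR N).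
    assert (E : 2 * L / eps * eps = 2 * L) by (field; lra).
    apply (Rmult_lt_reg_r (INR (S k))); [lra|].
    unfold Rdiv at 1. rewrite Rmult_assoc, Rinv_l by lra. nra. }
  pose proof (Hsmall a Ha). pose proof (Hsmall b Hb).
  replace (grid_avg f L (S a) - grid_avg f L (S b)) with
    ((grid_avg f L (S a) - grid_avg f L (S a * S b))
     - (grid_avg f L (S b) - grid_avg f L (S a * S b))) by ring.
  eapply Rle_lt_trans; [apply Rabs_triang|]. rewrite Rabs_Ropp. lra.
Qed.

Lemma grid_avg_dev_le s n : (1 <= n)%nat -> 0 <= s <= L -> Rabs (f s - grid_avg f L n) <= L.
Proof.
  intros Hn Hs. assert (HnR : 0 < INR n) by (apply lt_0_INR; lia).
  unfold grid_avg, mean.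
  replace (f s - rsum n (fun i => f (grid_pt L n i)) / INR n) with
     (rsum n (fun i => f s - f (grid_pt L n i)) / INR n)
     by (rewrite rsum_minus, rsum_const; field; lra).
  unfold Rdiv. rewrite Rabs_mult, (Rabs_pos_eq (/ _)) by (left; apply Rinv_0_lt_compat; lra).
  apply Rle_trans with (rsum n (fun _ => L) * / INR n).
  - apply Rmult_le_compat_r; [left; apply Rinv_0_lt_compat; lra|].
    eapply Rle_trans; [apply rsum_abs|]. apply rsum_le. intros i Hi.
    eapply Rle_trans; [apply Lf|]. pose proof (grid_pt_range L HL n i Hi).
    apply Rabs_le. lra.
  - rewrite rsum_const. right. field. lra.
Qed.

End GridAverages.

Lemma grid_pt_between L n i al be : 0 < L -> (1 <= n)%nat ->
  INR n * al / L <= INR i <= INR n * be / L -> al <= grid_pt L n i <= be.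
Proof.
  intros HL Hn [H1 H2]. assert (HnR : 0 < INR n) by (apply lt_0_INR; lia).
  assert (Hh : 0 <= L / INR n) by (left; apply Rdiv_lt_0_compat; lra).
  apply (Rmult_le_compat_r (L / INR n)) in H1, H2; auto.
  replace (INR n * al / L * (L / INR n)) with al in H1 by (field; lra).
  replace (INR n * be / L * (L / INR n)) with be in H2 by (field; lra).
  unfold grid_pt. lra.
Qed.

Section CentroidDeviation.

Variables (gx gy : R -> R) (L : R).
Hypothesis HL : 0 < L.
Hypothesis Lx : forall s t, Rabs (gx s - gx t) <= Rabs (s - t).
Hypothesis Ly : forall s t, Rabs (gy s - gy t) <= Rabs (s - t).

Definition grid_inertia (n : nat) : R :=
  inertia (fun i => gx (grid_pt L n i)) (fun i => gy (grid_pt L n i)) n.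

Definition grid_inertia_var (n : nat) : R :=
  inertia_var (fun i => gx (grid_pt L n i)) (fun i => gy (grid_pt L n i)) n.

(* At grid points [centroid_dev n] is [centroid_dist2 - inertia], so [grid_inertia_var n] is
   the mean of its squares over the grid. *)
Definition centroid_dev (n : nat) (s : R) : R :=
  (gx s - grid_avg gx L n) ^ 2 + (gy s - grid_avg gy L n) ^ 2 - grid_inertia n.

Variable n : nat.
Hypothesis Hn : (1 <= n)%nat.

Lemma centroid_dev_lipschitz s t : 0 <= s <= L -> 0 <= t <= L ->
  Rabs (centroid_dev n s - centroid_dev n t) <= 4 * L * Rabs (s - t).
Proof.
  intros Hs Ht. unfold centroid_dev.
  pose proof (grid_avg_dev_le gx L HL Lx s n Hn Hs) as Ha.
  pose proof (grid_avg_dev_le gx L HL Lx t n Hn Ht) as Hb.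
  pose proof (grid_avg_dev_le gy L HL Ly s n Hn Hs) as Hc.
  pose proof (grid_avg_dev_le gy L HL Ly t n Hn Ht) as Hd.
  pose proof (Lx s t) as Hx. pose proof (Ly s t) as Hy.
  set (a := gx s - grid_avg gx L n) in *. set (b := gx t - grid_avg gx L n) in *.
  set (c := gy s - grid_avg gy L n) in *. set (d := gy t - grid_avg gy L n) in *.
  replace (gx s - gx t) with (a - b) in Hx by (unfold a, b; ring).
  replace (gy s - gy t) with (c - d) in Hy by (unfold c, d; ring).
  replace (a ^ 2 + c ^ 2 - grid_inertia n - (b ^ 2 + d ^ 2 - grid_inertia n)) with
    ((a - b) * (a + b) + (c - d) * (c + d)) by ring.
  eapply Rle_trans; [apply Rabs_triang|]. rewrite !Rabs_mult.
  assert (Rabs (a + b) <= 2 * L) by (eapply Rle_trans; [apply Rabs_triang|]; lra).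
  assert (Rabs (c + d) <= 2 * L) by (eapply Rle_trans; [apply Rabs_triang|]; lra).
  pose proof (Rabs_pos (a - b)). pose proof (Rabs_pos (c - d)).
  pose proof (Rabs_pos (a + b)). pose proof (Rabs_pos (c + d)). nra.
Qed.

(* Near [s0] the deviation stays above [a / 2], and more than [n del / L - 1] grid points
   lie in [[al, be]]. *)
Lemma grid_inertia_var_ge_on_interval s0 a del al be :
  0 <= s0 <= L -> 0 < a -> a <= Rabs (centroid_dev n s0) ->
  0 < del -> 4 * L * del <= a / 2 ->
  0 <= al -> be < L -> be - al = del -> s0 - del <= al -> be <= s0 + del ->
  (del / L - 1 / INR n) * (a ^ 2 / 4) <= grid_inertia_var n.
Proof.
  intros Hs0 Ha Hdev Hdel Hsmall Hal Hbe Hlen Hs1 Hs2.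
  assert (HnR : 0 < INR n) by (apply lt_0_INR; lia).
  set (lo := INR n * al / L). set (hi := INR n * be / L).
  assert (Hterm : forall i, (i < n)%nat ->
            ind lo hi (INR i) * (a ^ 2 / 4) <= centroid_dev n (grid_pt L n i) ^ 2).
  { intros i Hi.
    destruct (ind_cases lo hi (INR i)) as [E|E]; rewrite E; [rewrite Rmult_0_l; apply pow2_ge_0|].
    assert (Hpt : al <= grid_pt L n i <= be)
      by (apply grid_pt_between; auto; apply (ind_pos_in lo hi); lra).
    pose proof (centroid_dev_lipschitz (grid_pt L n i) s0 ltac:(lra) ltac:(lra)) as Hl.
    assert (Rabs (grid_pt L n i - s0) <= del) by (apply Rabs_le; lra).
    assert (Rabs (centroid_dev n (grid_pt L n i) - centroid_dev n s0) <= a / 2).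
    { eapply Rle_trans; [apply Hl|]. eapply Rle_trans; [|apply Hsmall].
      apply Rmult_le_compat_l; lra. }
    assert (a / 2 <= Rabs (centroid_dev n (grid_pt L n i))).
    { pose proof (Rabs_triang_inv (centroid_dev n s0) (centroid_dev n (grid_pt L n i))).
      rewrite Rabs_minus_sym in H0. lra. }
    rewrite <- (pow2_abs (centroid_dev n (grid_pt L n i))).
    pose proof (Rabs_pos (centroid_dev n (grid_pt L n i))). nra. }
  assert (Hcnt : INR n * del / L - 1 < lattice_count lo hi n).
  { replace (INR n * del / L - 1) with (hi - lo - 1)
      by (unfold hi, lo; rewrite <- Hlen; field; lra).
    apply lattice_count_gt.
    - unfold lo. apply Rmult_le_pos; [nra|left; apply Rinv_0_lt_compat; lra].
    - unfold hi. apply (Rmult_lt_reg_r L); auto.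
      replace (INR n * be / L * L) with (INR n * be) by (field; lra). nra. }
  assert (Hsum : lattice_count lo hi n * (a ^ 2 / 4) <= INR n * grid_inertia_var n).
  { replace (INR n * grid_inertia_var n)
      with (rsum n (fun i => centroid_dev n (grid_pt L n i) ^ 2)).
    2:{ unfold grid_inertia_var, inertia_var. rewrite INR_mult_mean by auto. reflexivity. }
    unfold lattice_count. rewrite Rmult_comm, <- rsum_scal. apply rsum_le; intros i Hi.
    rewrite Rmult_comm. now apply Hterm. }
  apply (Rmult_le_reg_l (INR n)); auto.
  replace (INR n * ((del / L - 1 / INR n) * (a ^ 2 / 4)))
    with ((INR n * del / L - 1) * (a ^ 2 / 4)) by (field; lra).
  assert (0 <= a ^ 2 / 4) by (pose proof (pow2_ge_0 a); lra). nra.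
Qed.

Lemma grid_inertia_var_ge s0 a : 0 <= s0 < L -> 0 < a -> a <= Rabs (centroid_dev n s0) ->
  (Rmin (a / (8 * L)) (L / 4) / L - 1 / INR n) * (a ^ 2 / 4) <= grid_inertia_var n.
Proof.
  intros Hs0 Ha Hdev.
  set (del := Rmin (a / (8 * L)) (L / 4)).
  assert (Hdel : 0 < del) by (apply Rmin_pos; apply Rdiv_lt_0_compat; lra).
  assert (Hdel1 : del <= a / (8 * L)) by apply Rmin_l.
  assert (Hdel2 : del <= L / 4) by apply Rmin_r.
  assert (Hsmall : 4 * L * del <= a / 2).
  { assert (E : a / (8 * L) * (8 * L) = a) by (field; lra). nra. }
  destruct (Rle_lt_dec s0 (L / 2)).
  - apply (grid_inertia_var_ge_on_interval s0 a del s0 (s0 + del)); auto; lra.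
  - apply (grid_inertia_var_ge_on_interval s0 a del (s0 - del) s0); auto; lra.
Qed.

End CentroidDeviation.

Lemma two_PI_pos : 0 < 2 * PI.
Proof. pose proof PI_RGT_0. lra. Qed.

Lemma cos_lipschitz s t : Rabs (cos s - cos t) <= Rabs (s - t).
Proof.
  apply (Rabs_sub_le_of_deriv_bound cos (fun x => - sin x)); [apply derivable_pt_lim_cos|].
  intros x. rewrite Rabs_Ropp. apply Rabs_le. pose proof (SIN_bound x). lra.
Qed.

Lemma sin_lipschitz s t : Rabs (sin s - sin t) <= Rabs (s - t).
Proof.
  apply (Rabs_sub_le_of_deriv_bound sin cos); [apply derivable_pt_lim_sin|].
  intros x. apply Rabs_le. pose proof (COS_bound x). lra.
Qed.

Lemma Un_cv_of_le (u : nat -> R) l :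
  (forall eps, 0 < eps -> exists N, forall n, (N <= n)%nat -> Rabs (u n - l) <= eps) ->
  Un_cv u l.
Proof.
  intros H eps Heps. destruct (H (eps / 2)) as [N HN]; [lra|].
  exists N. intros n Hn. unfold Rdist. specialize (HN n Hn). lra.
Qed.

Lemma grid_mean_pow2 gx gy L n :
  grid_mean gx gy L n (fun r => r ^ 2)
  = rsum2 n (fun i j => (gx (grid_pt L n i) - gx (grid_pt L n j)) ^ 2
                        + (gy (grid_pt L n i) - gy (grid_pt L n j)) ^ 2) / INR n ^ 2.
Proof. unfold grid_mean. f_equal. apply rsum2_ext. intros. apply pow2_dist2. Qed.

Lemma grid_mean_pow4 gx gy L n :
  grid_mean gx gy L n (fun r => r ^ 4)
  = rsum2 n (fun i j => ((gx (grid_pt L n i) - gx (grid_pt L n j)) ^ 2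
                         + (gy (grid_pt L n i) - gy (grid_pt L n j)) ^ 2) ^ 2) / INR n ^ 2.
Proof.
  unfold grid_mean. f_equal. apply rsum2_ext. intros. unfold grid_chord, chord.
  rewrite <- pow2_dist2. ring.
Qed.

Section SameDistributionAsCircle.

Variables (gx gy : R -> R) (L : R).
Hypothesis HL : 0 < L.
Hypothesis Lx : forall s t, Rabs (gx s - gx t) <= Rabs (s - t).
Hypothesis Ly : forall s t, Rabs (gy s - gy t) <= Rabs (s - t).
Hypothesis Hdistr : forall r, distr gx gy L HL r = distr cos sin (2 * PI) two_PI_pos r.

Lemma grid_mean_close_to_circle (phi : R -> R) Lam :
  phi 0 = 0 -> (forall x y, 0 <= x <= y -> phi x <= phi y) -> 0 <= Lam ->
  (forall x y, 0 <= x <= y -> y <= 2 * L + 2 * (2 * PI) + 1 -> phi y - phi x <= Lam * (y - x)) ->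
  forall eps, 0 < eps -> exists N0, forall n, (N0 <= n)%nat -> (1 <= n)%nat ->
    Rabs (grid_mean gx gy L n phi - grid_mean cos sin (2 * PI) n phi) <= eps.
Proof.
  intros. eapply grid_mean_equidistributed; eauto using cos_lipschitz, sin_lipschitz.
Qed.

(* Equality of the second and fourth moments with those of the circle ([2] and [6]) forces
   [V -> 1] and then [2 W + 6 V ^ 2 <= 6 + o(1)]. *)
Lemma grid_inertia_moments_close eps : 0 < eps -> exists N, forall n, (N <= n)%nat ->
  Rabs (grid_inertia gx gy L n - 1) <= eps /\ grid_inertia_var gx gy L n <= eps.
Proof.
  intros Heps.
  set (e := Rmin 1 eps / 8).
  assert (He : 0 < e) by (unfold e; pose proof (Rmin_pos 1 eps ltac:(lra) Heps); lra).
  assert (He1 : e <= eps / 8) by (unfold e; pose proof (Rmin_r 1 eps); lra).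
  assert (He2 : e <= 1 / 8) by (unfold e; pose proof (Rmin_l 1 eps); lra).
  set (Y := 2 * L + 2 * (2 * PI) + 1).
  assert (HY : 0 < Y) by (unfold Y; pose proof two_PI_pos; lra).
  destruct (grid_mean_close_to_circle (fun r => r ^ 2) (2 * Y)) with (eps := e) as [N2 HN2].
  { simpl; ring. }
  { intros; nra. }
  { lra. }
  { intros x y Hxy HyY. fold Y in HyY. nra. }
  { exact He. }
  destruct (grid_mean_close_to_circle (fun r => r ^ 4) (4 * Y ^ 3)) with (eps := e) as [N4 HN4].
  { simpl; ring. }
  { intros x y Hxy. assert (x ^ 2 <= y ^ 2) by nra. nra. }
  { pose proof (pow_lt Y 3 HY). lra. }
  { intros x y Hxy HyY. fold Y in HyY.
    replace (y ^ 4 - x ^ 4) with ((y - x) * ((y + x) * (y ^ 2 + x ^ 2))) by ring.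
    replace (4 * Y ^ 3 * (y - x)) with ((y - x) * ((2 * Y) * (2 * Y ^ 2))) by ring.
    apply Rmult_le_compat_l; [lra|]. apply Rmult_le_compat; nra. }
  { exact He. }
  exists (Nat.max 3 (Nat.max N2 N4)). intros n Hn.
  assert (Hn1 : (1 <= n)%nat) by lia.
  specialize (HN2 n ltac:(lia) Hn1). specialize (HN4 n ltac:(lia) Hn1).
  destruct (circle_grid_moments n ltac:(lia)) as [C2 C4]. rewrite C2 in HN2. rewrite C4 in HN4.
  rewrite grid_mean_pow2, mean_pair_dist2 in HN2 by auto. rewrite grid_mean_pow4 in HN4.
  pose proof (mean_pair_dist4_ge (fun i => gx (grid_pt L n i)) (fun i => gy (grid_pt L n i)) n Hn1)
    as M4.
  fold (grid_inertia gx gy L n) (grid_inertia_var gx gy L n) in HN2, M4.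
  apply Rabs_le_inv in HN2. apply Rabs_le_inv in HN4.
  set (V := grid_inertia gx gy L n) in *. set (W := grid_inertia_var gx gy L n) in *.
  split; [apply Rabs_le; lra|].
  assert (V ^ 2 >= 1 - e) by nra. lra.
Qed.

Lemma grid_inertia_var_cv : Un_cv (fun k => grid_inertia_var gx gy L (S k)) 0.
Proof.
  apply Un_cv_of_le. intros eps Heps. destruct (grid_inertia_moments_close eps Heps) as [N HN].
  exists N. intros n Hn. destruct (HN (S n) ltac:(lia)) as [_ HW].
  assert (0 <= grid_inertia_var gx gy L (S n)).
  { apply Rmult_le_pos; [apply rsum_nonneg; intros; apply pow2_ge_0|].
    left; apply Rinv_0_lt_compat, lt_0_INR; lia. }
  rewrite Rminus_0_r, Rabs_pos_eq; lra.
Qed.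

Lemma grid_inertia_cv : Un_cv (fun k => grid_inertia gx gy L (S k)) 1.
Proof.
  apply Un_cv_of_le. intros eps Heps. destruct (grid_inertia_moments_close eps Heps) as [N HN].
  exists N. intros n Hn. apply (HN (S n)). lia.
Qed.

Lemma centroid_dev_cv t0 : 0 <= t0 < L -> Un_cv (fun k => centroid_dev gx gy L (S k) t0) 0.
Proof.
  intros Ht0. apply Un_cv_of_le. intros a Ha.
  set (del := Rmin (a / (8 * L)) (L / 4)).
  assert (Hdel : 0 < del) by (apply Rmin_pos; apply Rdiv_lt_0_compat; lra).
  set (w := del / (2 * L) * (a ^ 2 / 4)).
  assert (Hw : 0 < w).
  { apply Rmult_lt_0_compat; [apply Rdiv_lt_0_compat; lra|].
    pose proof (pow_lt a 2 Ha). lra. }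
  destruct (grid_inertia_var_cv (w / 2) ltac:(lra)) as [N1 HN1].
  destruct (INR_unbounded (2 * L / del)) as [N2 HN2].
  exists (Nat.max N1 N2). intros n Hn.
  specialize (HN1 n ltac:(lia)). unfold Rdist in HN1. rewrite Rminus_0_r in HN1.
  apply Rnot_lt_le. intros Hbig. rewrite Rminus_0_r in Hbig.
  pose proof (grid_inertia_var_ge gx gy L HL Lx Ly (S n) ltac:(lia) t0 a Ht0 Ha
                ltac:(lra)) as HWge.
  fold del in HWge.
  assert (Hinv : 1 / INR (S n) <= del / (2 * L)).
  { assert (INR N2 <= INR n) by (apply le_INR; lia). rewrite S_INR.
    assert (E : 2 * L / del * del = 2 * L) by (field; lra).
    apply Rmult_le_reg_r with ((INR n + 1) * (2 * L)); [pose proof (pos_INR n); nra|].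
    replace (1 / (INR n + 1) * ((INR n + 1) * (2 * L))) with (2 * L)
      by (field; pose proof (pos_INR n); lra).
    replace (del / (2 * L) * ((INR n + 1) * (2 * L))) with ((INR n + 1) * del) by (field; lra).
    nra. }
  assert (0 <= a ^ 2 / 4) by (pose proof (pow2_ge_0 a); lra).
  assert (w <= (del / L - 1 / INR (S n)) * (a ^ 2 / 4)).
  { unfold w. apply Rmult_le_compat_r; auto.
    assert (del / L = 2 * (del / (2 * L))) by (field; lra). lra. }
  pose proof (Rle_abs (grid_inertia_var gx gy L (S n))). lra.
Qed.

End SameDistributionAsCircle.

Lemma periodic_shift_Z {A : Type} (f : R -> A) L :
  (forall t, f (t + L) = f t) -> forall (z : Z) s, f (s + IZR z * L) = f s.
Proof.
  intros Hper.
  assert (Hnat : forall (k : nat) s, f (s + INR k * L) = f s).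
  { induction k as [|k IH]; intros s; [simpl; f_equal; ring|].
    rewrite S_INR, <- (IH s), <- (Hper (s + INR k * L)). f_equal. ring. }
  intros z s. destruct (Z.le_ge_cases 0 z) as [Hz|Hz].
  - rewrite <- (Z2Nat.id z Hz), <- INR_IZR_INZ. apply Hnat.
  - rewrite <- (Hnat (Z.to_nat (- z)) (s + IZR z * L)), INR_IZR_INZ, Z2Nat.id by lia.
    f_equal. rewrite opp_IZR. ring.
Qed.

Lemma periodic_reduce {A : Type} (f : R -> A) L : 0 < L ->
  (forall t, f (t + L) = f t) -> forall t, exists t0, 0 <= t0 < L /\ f t = f t0.
Proof.
  intros HL Hper t. set (z := Int_part (t / L)).
  exists (t - IZR z * L). destruct (base_Int_part (t / L)) as [H1 H2]. fold z in H1, H2.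
  assert (E : t / L * L = t) by (field; lra).
  split; [split; nra|].
  rewrite <- (periodic_shift_Z f L Hper z (t - IZR z * L)). f_equal. ring.
Qed.

Lemma Un_cv_sq_sub a (u : nat -> R) l : Un_cv u l -> Un_cv (fun k => (a - u k) ^ 2) ((a - l) ^ 2).
Proof. intros H. apply (continuity_seq (fun x => (a - x) ^ 2)); [reg|exact H]. Qed.

Lemma unit_speed_lipschitz (f f' g' : R -> R) :
  (forall t, derivable_pt_lim f t (f' t)) -> (forall t, f' t ^ 2 + g' t ^ 2 = 1) ->
  forall s t, Rabs (f s - f t) <= Rabs (s - t).
Proof.
  intros Hd Hunit. apply (Rabs_sub_le_of_deriv_bound f f' Hd). intros t.
  specialize (Hunit t). pose proof (pow2_ge_0 (g' t)). apply Rabs_le. nra.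
Qed.

Lemma distr_eq_of_dist_distr gx gy L gx' gy' L' (HL : 0 < L) (HL' : 0 < L') :
  (forall r h1 h2, 0 <= r ->
     dist_distr gx gy L r h1 -> dist_distr gx' gy' L' r h2 -> h1 = h2) ->
  forall r, distr gx gy L HL r = distr gx' gy' L' HL' r.
Proof.
  intros Hd r. destruct (Rlt_dec r 0).
  - now rewrite !distr_neg.
  - apply (Hd r); [lra|apply distr_spec|apply distr_spec].
Qed.

Theorem proposition5p6 (gx gy : R -> R) (L : R) :
  C2_simple_closed_arclength gx gy L ->
  (forall r h1 h2, 0 <= r ->
     dist_distr gx gy L r h1 -> dist_distr cos sin (2 * PI) r h2 -> h1 = h2) ->
  exists cx cy : R, forall t, dist2 (gx t) (gy t) cx cy = 1.
Proof.
  intros [HL [[gx1 [gx2 [gy1 [gy2 [Dx [_ [Dy [_ [_ [_ Hunit]]]]]]]]]] [Hper _]]] Hd.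
  pose proof (unit_speed_lipschitz gx gx1 gy1 Dx Hunit) as Lx.
  pose proof (unit_speed_lipschitz gy gy1 gx1 Dy
                ltac:(intros; rewrite Rplus_comm; apply Hunit)) as Ly.
  pose proof (distr_eq_of_dist_distr gx gy L cos sin (2 * PI) HL two_PI_pos Hd) as Hdistr.
  destruct (R_complete _ (grid_avg_cauchy gx L HL Lx)) as [cx Hcx].
  destruct (R_complete _ (grid_avg_cauchy gy L HL Ly)) as [cy Hcy].
  exists cx, cy. intros t.
  destruct (periodic_reduce (fun s => (gx s, gy s)) L HL) with (t := t) as [t0 [Ht0 E]].
  { intros s. destruct (Hper s) as [-> ->]. reflexivity. }
  injection E as -> ->.
  assert (Hlim : Un_cv (fun k => centroid_dev gx gy L (S k) t0)
                   ((gx t0 - cx) ^ 2 + (gy t0 - cy) ^ 2 - 1)).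
  { apply CV_minus; [apply CV_plus; now apply Un_cv_sq_sub|].
    now apply grid_inertia_cv with (HL := HL). }
  pose proof (UL_sequence _ _ _ Hlim (centroid_dev_cv gx gy L HL Lx Ly Hdistr t0 Ht0)).
  unfold dist2. replace ((gx t0 - cx) ^ 2 + (gy t0 - cy) ^ 2) with 1 by lra. apply sqrt_1.
Qed.
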